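(* As formal power series in $q$ whose coefficients are polynomials in $z$ (equivalently, as an identity of analytic functions for $|q|<1$ and $|z|$ sufficiently small), \[ \sum_{n=1}^{\infty} \frac{q^n}{(zq^n;q)_{n+1}\,(zq^{2n+2};q^2)_{\infty}} =\sum_{n=0}^{\infty} \frac{z^nq^{2n^2+2n+1}}{(q;q^2)_{n+1}\,(zq;q^2)_{n+1}}, \] and \[ \sum_{n=0}^{\infty} q^n\,(-zq^{n+1};q)_{n}\,(-zq^{2n+2};q^2)_{\infty} =\sum_{n=0}^{\infty} \frac{z^n q^{n^2+n}}{(q;q^2)_{n+1}}. \]
   Context: For $a$ and $q$, $(a;q)_0:=1$, $(a;q)_n:=(1-a)(1-aq)\cdots(1-aq^{n-1})$ for $n\ge1$, and $(a;q)_\infty:=\lim_{n\to\infty}(a;q)_n$ for $|q|<1$. *)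

From Stdlib Require Import Reals.
From Coquelicot Require Import Coquelicot.

Open Scope C_scope.

Fixpoint cpow (x : Complex.C) (n : nat) : Complex.C :=
  match n with
  | O => RtoC 1
  | S m => Cmult x (cpow x m)
  end.

(* finite q-Pochhammer symbol (a;q)_n = (1-a)(1-aq)...(1-aq^(n-1)) *)
Fixpoint qpoch (a q : Complex.C) (n : nat) : Complex.C :=
  match n with
  | O => RtoC 1
  | S m => Cmult (qpoch a q m) (Cminus (RtoC 1) (Cmult a (cpow q m)))
  end.

Definition is_qpoch_inf (a q P : Complex.C) : Prop :=
  filterlim (fun n => qpoch a q n) eventually (locally P).

Definition qpoch_inf (a q : Complex.C) : Complex.C :=
  @lim C_CompleteNormedModule (filtermap (fun n => qpoch a q n) eventually).

From Stdlib Require Import Reals Lra Lia.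
From Coquelicot Require Import Coquelicot.
Open Scope C_scope.

(* Fix q with |q| < 1 and view each side of an identity as a function of z on the disk
   |z| < 1/2, where every q-Pochhammer factor is bounded and bounded away from 0.
   Termwise recurrences show that the right-hand sides R1, R2 solve the first-order
   q-difference equations
     (1 - zq) R1(z) - q R1(zq^2) = q,        R2(z) - q (1 + zq) R2(zq^2) = 1,
   while the left-hand sides solve the second-order equations obtained by subtracting each
   equation at z and at zq^2; for them the relevant combination of summands telescopes
   against an explicit rational certificate.  Both sides are Lipschitz at z = 0 with the same
   value there.  For such a solution F of the second-order equation, the defect of the
   first-order equation is invariant under z -> zq^2 and vanishes at 0, so it vanishes; then
   D = F - G solves the homogeneous first-order equation, whose coefficients make |D|
   non-decreasing along z, zq^2, zq^4, ... near 0, and the Lipschitz bound at 0 forces D = 0. *)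

Lemma Csub_0_r x : x - 0 = x.
Proof. ring. Qed.

Lemma Csub_eq0 x y : x - y = 0 -> x = y.
Proof. intros H. replace x with (x - y + y) by ring. rewrite H. ring. Qed.

Lemma cpow_add x m n : cpow x (m + n) = cpow x m * cpow x n.
Proof. induction m as [|m IH]; simpl; [ring | rewrite IH; ring]. Qed.

Lemma cpow_mul x y n : cpow (x * y) n = cpow x n * cpow y n.
Proof. induction n as [|n IH]; simpl; [ring | rewrite IH; ring]. Qed.

Lemma cpow_double_add2 q n : cpow q (2 * n + 2) = q * q * (cpow q n * cpow q n).
Proof. replace (2 * n + 2)%nat with (n + n + 2)%nat by lia. rewrite !cpow_add. simpl. ring. Qed.

Lemma Cmod_cpow x n : Cmod (cpow x n) = (Cmod x ^ n)%R.
Proof. induction n as [|n IH]; simpl; [apply Cmod_1 | rewrite Cmod_mult, IH; ring]. Qed.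

Lemma qpoch_recr a p n : qpoch a p (S n) = qpoch a p n * (1 - a * cpow p n).
Proof. reflexivity. Qed.

Lemma qpoch_recl a p n : qpoch a p (S n) = (1 - a) * qpoch (a * p) p n.
Proof.
  induction n as [|n IH]; [simpl; ring|].
  rewrite qpoch_recr, IH. simpl. ring.
Qed.

Lemma pow_le_one x n : (0 <= x <= 1)%R -> (x ^ n <= 1)%R.
Proof. intros Hx. rewrite <- (pow1 n). apply pow_incr. exact Hx. Qed.

Lemma pow_bounds x n : (0 <= x <= 1)%R -> (0 <= x ^ n <= 1)%R.
Proof. intros Hx. split; [apply pow_le; lra | apply pow_le_one, Hx]. Qed.

Lemma Rmult_le_one_l x y : (0 <= x <= 1)%R -> (0 <= y)%R -> (x * y <= y)%R.
Proof. intros Hx Hy. nra. Qed.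

Lemma pow_le_decr x m n : (0 <= x <= 1)%R -> (m <= n)%nat -> (x ^ n <= x ^ m)%R.
Proof.
  intros Hx Hmn. replace n with (m + (n - m))%nat by lia. rewrite pow_add.
  assert (0 <= x ^ m)%R by (apply pow_le; lra).
  assert (x ^ (n - m) <= 1)%R by (apply pow_le_one; exact Hx).
  nra.
Qed.

Lemma exp_le_compat x y : (x <= y)%R -> (exp x <= exp y)%R.
Proof. intros [Hlt | ->]; [left; apply exp_increasing, Hlt | apply Rle_refl]. Qed.

Lemma exp_neg_le_one_sub x : (0 <= x < 1)%R -> (exp (- (x / (1 - x))) <= 1 - x)%R.
Proof.
  intros Hx. rewrite exp_Ropp.
  assert (Hinv : (/ (1 - x) <= exp (x / (1 - x)))%R).
  { eapply Rle_trans; [|apply exp_ineq1_le]. right. field. lra. }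
  apply Rle_trans with (/ / (1 - x))%R; [|rewrite Rinv_inv; lra].
  apply Rinv_le_contravar; [apply Rinv_0_lt_compat; lra | exact Hinv].
Qed.

Lemma Cmod_1_sub_le y : (Cmod (1 - y) <= 1 + Cmod y)%R.
Proof. eapply Rle_trans; [apply Cmod_triangle|]. rewrite Cmod_opp, Cmod_1. lra. Qed.

Lemma Cmod_1_sub_ge y : (1 - Cmod y <= Cmod (1 - y))%R.
Proof.
  assert (H := Cmod_triangle (1 - y) y).
  replace (1 - y + y) with (RtoC 1) in H by ring. rewrite Cmod_1 in H. lra.
Qed.

Lemma Cmod_1_add_ge y : (1 - Cmod y <= Cmod (1 + y))%R.
Proof.
  assert (H := Cmod_1_sub_ge (- y)). rewrite Cmod_opp in H.
  replace (1 - - y) with (1 + y) in H by ring. exact H.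
Qed.

Lemma one_sub_neq0 y : (Cmod y < 1)%R -> 1 - y <> 0.
Proof. intros Hy E. assert (H := Cmod_1_sub_ge y). rewrite E, Cmod_0 in H. lra. Qed.

Lemma one_add_neq0 y : (Cmod y < 1)%R -> 1 + y <> 0.
Proof. intros Hy E. assert (H := Cmod_1_add_ge y). rewrite E, Cmod_0 in H. lra. Qed.

Lemma Cmod_mul_le1 x y : (Cmod x <= 1)%R -> (Cmod y <= 1)%R -> (Cmod (x * y) <= 1)%R.
Proof. intros Hx Hy. rewrite Cmod_mult. pose proof (Cmod_ge_0 x). pose proof (Cmod_ge_0 y). nra. Qed.

Lemma Cmod_mul_le_l x y : (Cmod y <= 1)%R -> (Cmod (x * y) <= Cmod x)%R.
Proof. intros Hy. rewrite Cmod_mult. pose proof (Cmod_ge_0 x). pose proof (Cmod_ge_0 y). nra. Qed.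

Lemma Cmod_cpow_le1 q n : (Cmod q <= 1)%R -> (Cmod (cpow q n) <= 1)%R.
Proof. intros Hq. rewrite Cmod_cpow. apply pow_le_one. split; [apply Cmod_ge_0 | exact Hq]. Qed.

Lemma Cmod_mul_sub1_le x y : (Cmod (x * y - 1) <= Cmod x * Cmod (y - 1) + Cmod (x - 1))%R.
Proof.
  replace (x * y - 1) with (x * (y - 1) + (x - 1)) by ring.
  rewrite <- Cmod_mult. apply Cmod_triangle.
Qed.

Lemma Cmod_div_le x y A B : (0 < B)%R -> (Cmod x <= A)%R -> (B <= Cmod y)%R ->
  (Cmod (x / y) <= A / B)%R.
Proof.
  intros HB Hx Hy. assert (Hy0 : y <> 0) by (intros E; rewrite E, Cmod_0 in Hy; lra).
  unfold Cdiv. rewrite Cmod_mult, Cmod_inv by exact Hy0.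
  apply Rmult_le_compat; [apply Cmod_ge_0 | left; apply Rinv_0_lt_compat; lra | exact Hx |].
  apply Rinv_le_contravar; assumption.
Qed.

Lemma Cmod_inv_le_exp x t : (exp (- t) <= Cmod x)%R -> x <> 0 /\ (Cmod (/ x) <= exp t)%R.
Proof.
  intros H. assert (Hpos := exp_pos (- t)).
  assert (Hx : x <> 0) by (intros E; rewrite E, Cmod_0 in H; lra).
  split; [exact Hx|]. rewrite Cmod_inv by exact Hx.
  apply Rle_trans with (/ exp (- t))%R; [apply Rinv_le_contravar; assumption|].
  rewrite exp_Ropp, Rinv_inv. apply Rle_refl.
Qed.

Lemma Cmod_add_le x y A B : (Cmod x <= A)%R -> (Cmod y <= B)%R -> (Cmod (x + y) <= A + B)%R.
Proof. intros Hx Hy. eapply Rle_trans; [apply Cmod_triangle | lra]. Qed.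

Lemma Cmod_sub_le x y A B : (Cmod x <= A)%R -> (Cmod y <= B)%R -> (Cmod (x - y) <= A + B)%R.
Proof. intros Hx Hy. apply Cmod_add_le; [exact Hx | rewrite Cmod_opp; exact Hy]. Qed.

(* [Cmod_le_factor] proves [Cmod (x * y1 * ... * yk) <= c] by discarding the factors [yi] of
   modulus at most 1 and closing [Cmod x <= c] from the context. *)
Ltac Cmod_le1 :=
  repeat apply Cmod_mul_le1;
  first [ assumption | apply Cmod_cpow_le1; assumption | rewrite ?Cmod_1; lra ].

Ltac Cmod_le_factor :=
  rewrite ?Cmod_opp;
  repeat (eapply Rle_trans; [apply Cmod_mul_le_l; Cmod_le1 |]);
  first [ apply Rle_refl | assumption | lra ].

Lemma filterlim_C_eps (x : nat -> C) (l : C) :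
  filterlim x eventually (locally l) <->
  (forall eps : R, (0 < eps)%R -> exists N, forall n, (N <= n)%nat -> (Cmod (x n - l) < eps)%R).
Proof.
  rewrite filterlim_locally_ball_norm. split.
  - intros H eps Heps. exact (H (mkposreal eps Heps)).
  - intros H eps. exact (H eps (cond_pos eps)).
Qed.

Lemma filterlim_C_unique (x : nat -> C) (l l' : C) :
  filterlim x eventually (locally l) -> filterlim x eventually (locally l') -> l = l'.
Proof.
  apply (@filterlim_locally_unique nat C_AbsRing C_NormedModule).
  apply Proper_StrongProper, eventually_filter.
Qed.

Lemma filterlim_lim_of_cauchy (x : nat -> C) :
  (forall eps : posreal, exists c : C, eventually (fun n => ball c eps (x n))) ->
  filterlim x eventually (locally (@lim C_CompleteNormedModule (filtermap x eventually))).
Proof.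
  intros Hcauchy. apply filterlim_locally. intros eps.
  apply (complete_cauchy (T := C_CompleteNormedModule) (filtermap x eventually)); [|exact Hcauchy].
  apply filtermap_proper_filter, eventually_filter.
Qed.

Lemma filterlim_lim_of_Cmod_cauchy (x : nat -> C) :
  (forall eps : R, (0 < eps)%R -> exists N, forall n, (N <= n)%nat -> (Cmod (x n - x N) < eps)%R) ->
  filterlim x eventually (locally (@lim C_CompleteNormedModule (filtermap x eventually))).
Proof.
  intros H. apply filterlim_lim_of_cauchy. intros eps.
  destruct (H eps (cond_pos eps)) as [N HN]. exists (x N), N. intros n Hn.
  apply (norm_compat1 (K := C_AbsRing) (V := C_NormedModule)), HN, Hn.
Qed.

Lemma lim_filtermap_eq (x : nat -> C) (l : C) :
  filterlim x eventually (locally l) -> @lim C_CompleteNormedModule (filtermap x eventually) = l.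
Proof.
  intros Hl. apply (filterlim_C_unique x); [|exact Hl].
  apply filterlim_lim_of_cauchy. intros eps. exists l.
  exact (proj1 (filterlim_locally (U := C_UniformSpace) x l) Hl eps).
Qed.

Lemma Cmod_sub_le_lim (x : nat -> C) (l c : C) (B : R) :
  filterlim x eventually (locally l) -> (forall n, (Cmod (x n - c) <= B)%R) -> (Cmod (l - c) <= B)%R.
Proof.
  intros Hl HB. apply Rle_plus_epsilon. intros eps Heps.
  destruct (proj1 (filterlim_C_eps x l) Hl eps Heps) as [N HN].
  specialize (HN N (le_n N)). specialize (HB N).
  replace (l - c) with ((x N - c) + - (x N - l)) by ring.
  eapply Rle_trans; [apply Cmod_triangle|]. rewrite Cmod_opp. lra.
Qed.

Lemma Cmod_le_lim (x : nat -> C) (l : C) (B : R) :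
  filterlim x eventually (locally l) -> (forall n, (Cmod (x n) <= B)%R) -> (Cmod l <= B)%R.
Proof.
  intros Hl HB. replace l with (l - 0) by ring.
  apply (Cmod_sub_le_lim x); [exact Hl|]. intros n. rewrite Csub_0_r. apply HB.
Qed.

Lemma Cmod_ge_lim (x : nat -> C) (l : C) (B : R) :
  filterlim x eventually (locally l) -> (forall n, (B <= Cmod (x n))%R) -> (B <= Cmod l)%R.
Proof.
  intros Hl HB. apply Rle_plus_epsilon. intros eps Heps.
  destruct (proj1 (filterlim_C_eps x l) Hl eps Heps) as [N HN].
  specialize (HN N (le_n N)). specialize (HB N).
  assert (Ht := Cmod_triangle l (x N - l)).
  replace (l + (x N - l)) with (x N) in Ht by ring. lra.
Qed.

Lemma mul_pow_lt_eventually (K x y : R) : (0 <= x < 1)%R -> (0 < y)%R ->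
  exists N, forall n, (N <= n)%nat -> (K * x ^ n < y)%R.
Proof.
  intros Hx Hy. assert (HK : (0 < Rabs K + 1)%R) by (pose proof (Rabs_pos K); lra).
  destruct (pow_lt_1_zero x ltac:(rewrite Rabs_pos_eq; lra) (y / (Rabs K + 1)) ltac:(apply Rdiv_lt_0_compat; lra))
    as [N HN].
  exists N. intros n Hn. specialize (HN n Hn).
  assert (Hxn : (0 <= x ^ n)%R) by (apply pow_le; lra).
  rewrite Rabs_pos_eq in HN by exact Hxn.
  apply (Rmult_lt_compat_l (Rabs K + 1)) in HN; [|exact HK].
  unfold Rdiv in HN. rewrite (Rmult_comm y), <- Rmult_assoc, Rinv_r, Rmult_1_l in HN by lra.
  pose proof (Rle_abs K). nra.
Qed.

Lemma le_geometric_eq0 (m K x : R) : (0 <= x < 1)%R -> (0 <= m)%R ->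
  (exists k0, forall k, (k0 <= k)%nat -> (m <= K * x ^ k)%R) -> m = 0%R.
Proof.
  intros Hx Hm [k0 Hk].
  destruct (Rle_lt_or_eq_dec _ _ Hm) as [Hpos | <-]; [exfalso | reflexivity].
  destruct (mul_pow_lt_eventually K x m Hx Hpos) as [N HN].
  specialize (Hk (max k0 N) (Nat.le_max_l _ _)). specialize (HN (max k0 N) (Nat.le_max_r _ _)).
  lra.
Qed.

(** * Bounds on q-Pochhammer symbols *)

Definition geom_sum (x : R) (n : nat) : R := ((1 - x ^ n) / (1 - x))%R.

Lemma geom_sum_O x : geom_sum x 0 = 0%R.
Proof. unfold geom_sum. simpl. unfold Rdiv. ring. Qed.

Lemma geom_sum_S x n : x <> 1%R -> geom_sum x (S n) = (geom_sum x n + x ^ n)%R.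
Proof. intros Hx. unfold geom_sum. simpl. field. lra. Qed.

Lemma geom_sum_bounds x n : (0 <= x < 1)%R -> (0 <= geom_sum x n <= / (1 - x))%R.
Proof.
  intros Hx. unfold geom_sum, Rdiv.
  assert (0 <= x ^ n)%R by (apply pow_le; lra).
  assert (x ^ n <= 1)%R by (apply pow_le_one; lra).
  assert (0 < / (1 - x))%R by (apply Rinv_0_lt_compat; lra).
  split; nra.
Qed.

Section FiniteQpochBounds.
Variables (a p : C) (rho : R).
Hypothesis Hp : (Cmod p < 1)%R.
Hypothesis Ha : (Cmod a <= rho)%R.
Local Notation pi := (Cmod p).

Let pi_bounds : (0 <= pi < 1)%R.
Proof. split; [apply Cmod_ge_0 | exact Hp]. Qed.

Let Cmod_a_pow n : (Cmod (a * cpow p n) <= rho * pi ^ n)%R.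
Proof.
  rewrite Cmod_mult, Cmod_cpow. apply Rmult_le_compat_r; [apply pow_le, Cmod_ge_0 | exact Ha].
Qed.

Lemma Cmod_qpoch_le_geom n : (Cmod (qpoch a p n) <= exp (rho * geom_sum pi n))%R.
Proof.
  induction n as [|n IH].
  - rewrite geom_sum_O, Rmult_0_r, exp_0. simpl. rewrite Cmod_1. lra.
  - rewrite qpoch_recr, Cmod_mult, geom_sum_S by lra.
    rewrite Rmult_plus_distr_l, exp_plus.
    apply Rmult_le_compat; [apply Cmod_ge_0 | apply Cmod_ge_0 | exact IH |].
    eapply Rle_trans; [apply Cmod_1_sub_le|].
    eapply Rle_trans; [|apply exp_ineq1_le]. pose proof (Cmod_a_pow n). lra.
Qed.

Lemma Cmod_qpoch_le n : (Cmod (qpoch a p n) <= exp (rho / (1 - pi)))%R.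
Proof.
  eapply Rle_trans; [apply Cmod_qpoch_le_geom | apply exp_le_compat].
  assert (0 <= rho)%R by (pose proof (Cmod_ge_0 a); lra).
  apply Rmult_le_compat_l; [lra | apply geom_sum_bounds, pi_bounds].
Qed.

Lemma Cmod_qpoch_sub_le_geom N j :
  (Cmod (qpoch a p (N + j) - qpoch a p N) <= exp (rho / (1 - pi)) * rho * pi ^ N * geom_sum pi j)%R.
Proof.
  induction j as [|j IH].
  - rewrite Nat.add_0_r, geom_sum_O, Rmult_0_r.
    replace (qpoch a p N - qpoch a p N) with (RtoC 0) by ring. rewrite Cmod_0. lra.
  - rewrite Nat.add_succ_r, qpoch_recr, geom_sum_S by lra.
    replace (qpoch a p (N + j) * (1 - a * cpow p (N + j)) - qpoch a p N)
      with ((qpoch a p (N + j) - qpoch a p N) + - (qpoch a p (N + j) * (a * cpow p (N + j)))) by ring.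
    eapply Rle_trans; [apply Cmod_triangle|]. rewrite Cmod_opp, Cmod_mult.
    assert (H1 := Cmod_qpoch_le (N + j)). assert (H2 := Cmod_a_pow (N + j)).
    rewrite pow_add in H2.
    assert (0 <= rho * (pi ^ N * pi ^ j))%R by (eapply Rle_trans; [apply Cmod_ge_0 | exact H2]).
    assert (Cmod (qpoch a p (N + j)) * Cmod (a * cpow p (N + j))
            <= exp (rho / (1 - pi)) * (rho * (pi ^ N * pi ^ j)))%R
      by (apply Rmult_le_compat; auto using Cmod_ge_0).
    nra.
Qed.

Lemma Cmod_qpoch_sub_le N m : (N <= m)%nat ->
  (Cmod (qpoch a p m - qpoch a p N) <= exp (rho / (1 - pi)) * rho * pi ^ N / (1 - pi))%R.
Proof.
  intros Hm. replace m with (N + (m - N))%nat by lia.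
  eapply Rle_trans; [apply Cmod_qpoch_sub_le_geom|]. unfold Rdiv.
  assert (0 <= rho)%R by (pose proof (Cmod_ge_0 a); lra).
  assert (0 <= exp (rho / (1 - pi)) * rho * pi ^ N)%R
    by (apply Rmult_le_pos; [apply Rmult_le_pos; [left; apply exp_pos | lra] | apply pow_le, pi_bounds]).
  apply Rmult_le_compat_l; [lra | apply geom_sum_bounds, pi_bounds].
Qed.

Hypothesis Hrho : (rho <= 1)%R.

Lemma Cmod_qpoch_sub1_le n : (Cmod (qpoch a p n - 1) <= rho * (exp (/ (1 - pi)) / (1 - pi)))%R.
Proof.
  assert (H := Cmod_qpoch_sub_le 0 n (Nat.le_0_l n)). simpl in H.
  eapply Rle_trans; [exact H|]. unfold Rdiv.
  assert (0 <= rho)%R by (pose proof (Cmod_ge_0 a); lra).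
  assert (0 < / (1 - pi))%R by (apply Rinv_0_lt_compat; lra).
  assert (exp (rho * / (1 - pi)) <= exp (/ (1 - pi)))%R by (apply exp_le_compat; nra).
  assert (0 <= rho * / (1 - pi))%R by nra. nra.
Qed.

Hypothesis Hrho1 : (rho < 1)%R.

Lemma Cmod_qpoch_ge_geom n : (exp (- (rho / (1 - rho) * geom_sum pi n)) <= Cmod (qpoch a p n))%R.
Proof.
  induction n as [|n IH].
  - rewrite geom_sum_O, Rmult_0_r, Ropp_0, exp_0. simpl. rewrite Cmod_1. lra.
  - rewrite qpoch_recr, Cmod_mult, geom_sum_S by lra.
    rewrite Rmult_plus_distr_l, Ropp_plus_distr, exp_plus.
    apply Rmult_le_compat; [left; apply exp_pos | left; apply exp_pos | exact IH |].
    set (x := (rho * pi ^ n)%R).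
    assert (Hpn : (0 <= pi ^ n <= 1)%R) by (split; [apply pow_le | apply pow_le_one]; lra).
    assert (Hr0 : (0 <= rho)%R) by (pose proof (Cmod_ge_0 a); lra).
    assert (Hx : (0 <= x <= rho)%R) by (unfold x; split; nra).
    eapply Rle_trans; [apply exp_le_compat | eapply Rle_trans; [apply (exp_neg_le_one_sub x); lra|]].
    + apply Ropp_le_contravar. unfold x, Rdiv.
      replace (rho * pi ^ n * / (1 - rho * pi ^ n))%R with (/ (1 - x) * x)%R by (unfold x; ring).
      replace (rho * / (1 - rho) * pi ^ n)%R with (/ (1 - rho) * x)%R by (unfold x; ring).
      apply Rmult_le_compat_r; [lra | apply Rinv_le_contravar; lra].
    + eapply Rle_trans; [|apply Cmod_1_sub_ge]. pose proof (Cmod_a_pow n). unfold x. lra.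
Qed.

Lemma Cmod_qpoch_ge n : (exp (- (rho / (1 - rho) / (1 - pi))) <= Cmod (qpoch a p n))%R.
Proof.
  eapply Rle_trans; [apply exp_le_compat | apply Cmod_qpoch_ge_geom].
  apply Ropp_le_contravar. unfold Rdiv at 2. apply Rmult_le_compat_l; [|apply geom_sum_bounds, pi_bounds].
  apply Rmult_le_pos; [pose proof (Cmod_ge_0 a); lra | left; apply Rinv_0_lt_compat; lra].
Qed.

End FiniteQpochBounds.

Lemma qpoch_inf_correct a p : (Cmod p < 1)%R -> is_qpoch_inf a p (qpoch_inf a p).
Proof.
  intros Hp. apply filterlim_lim_of_Cmod_cauchy. intros eps Heps.
  assert (Hpi : (0 <= Cmod p < 1)%R) by (split; [apply Cmod_ge_0 | exact Hp]).
  set (K := (exp (Cmod a / (1 - Cmod p)) * Cmod a / (1 - Cmod p))%R).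
  destruct (mul_pow_lt_eventually K (Cmod p) eps Hpi Heps) as [N HN].
  exists N. intros n Hn.
  eapply Rle_lt_trans; [apply (Cmod_qpoch_sub_le a p (Cmod a) Hp (Rle_refl _) N n Hn)|].
  replace (exp (Cmod a / (1 - Cmod p)) * Cmod a * Cmod p ^ N / (1 - Cmod p))%R with (K * Cmod p ^ N)%R
    by (unfold K, Rdiv; ring).
  apply HN, le_n.
Qed.

Section QpochInfBounds.
Variables (a p : C) (rho : R).
Hypothesis Hp : (Cmod p < 1)%R.
Hypothesis Ha : (Cmod a <= rho)%R.
Local Notation pi := (Cmod p).

Lemma Cmod_qpoch_inf_le : (Cmod (qpoch_inf a p) <= exp (rho / (1 - pi)))%R.
Proof.
  apply (Cmod_le_lim (qpoch a p)); [apply qpoch_inf_correct, Hp|].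
  intros n. apply Cmod_qpoch_le; assumption.
Qed.

Lemma Cmod_qpoch_inf_sub1_le : (rho <= 1)%R ->
  (Cmod (qpoch_inf a p - 1) <= rho * (exp (/ (1 - pi)) / (1 - pi)))%R.
Proof.
  intros Hrho. apply (Cmod_sub_le_lim (qpoch a p)); [apply qpoch_inf_correct, Hp|].
  intros n. apply Cmod_qpoch_sub1_le; assumption.
Qed.

Lemma Cmod_qpoch_inf_ge : (rho < 1)%R -> (exp (- (rho / (1 - rho) / (1 - pi))) <= Cmod (qpoch_inf a p))%R.
Proof.
  intros Hrho. apply (Cmod_ge_lim (qpoch a p)); [apply qpoch_inf_correct, Hp|].
  intros n. apply Cmod_qpoch_ge; assumption.
Qed.

End QpochInfBounds.

Lemma qpoch_inf_recl a p : (Cmod p < 1)%R -> qpoch_inf a p = (1 - a) * qpoch_inf (a * p) p.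
Proof.
  intros Hp. apply (filterlim_C_unique (fun n => qpoch a p (S n))).
  - rewrite filterlim_C_eps. intros eps Heps.
    destruct (proj1 (filterlim_C_eps _ _) (qpoch_inf_correct a p Hp) eps Heps) as [N HN].
    exists N. intros n Hn. apply HN. lia.
  - eapply filterlim_ext; [intros n; symmetry; apply qpoch_recl|].
    eapply filterlim_comp; [apply (qpoch_inf_correct (a * p) p Hp)|].
    apply (filterlim_scal_r (K := C_AbsRing) (V := C_NormedModule) (1 - a)).
Qed.

Definition CSeries (a : nat -> C) : C := @lim C_CompleteNormedModule (filtermap (sum_n a) eventually).

Lemma is_series_C_unique (a : nat -> C) l l' : is_series a l -> is_series a l' -> l = l'.
Proof. apply filterlim_C_unique. Qed.

Lemma is_series_dominated (a : nat -> C) (M x : R) : (0 <= x < 1)%R ->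
  (forall n, (Cmod (a n) <= M * x ^ n)%R) -> is_series a (CSeries a).
Proof.
  intros Hx Ha.
  destruct (ex_series_le (K := C_AbsRing) (V := C_CompleteNormedModule) a (fun n => M * x ^ n)%R Ha)
    as [l Hl].
  { apply (ex_series_scal_l (K := R_AbsRing) (V := R_NormedModule)).
    apply ex_series_geom. rewrite Rabs_pos_eq; lra. }
  replace (CSeries a) with l; [exact Hl|]. symmetry. apply lim_filtermap_eq, Hl.
Qed.

Lemma sum_n_telescope (w : nat -> C) N : sum_n (fun n => w n - w (S n)) N = w O - w (S N).
Proof.
  induction N as [|N IH]; [apply sum_O|].
  rewrite sum_Sn, IH. unfold plus. simpl. ring.
Qed.

Lemma is_series_telescope (u w : nat -> C) (M x : R) : (0 <= x < 1)%R ->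
  (forall n, u n = w n - w (S n)) -> (forall n, (Cmod (w n) <= M * x ^ n)%R) -> is_series u (w O).
Proof.
  intros Hx Hu Hw.
  assert (Hpartial : forall N, w O - w (S N) = sum_n u N).
  { intros N. rewrite (sum_n_ext _ _ N Hu). symmetry. apply sum_n_telescope. }
  apply filterlim_ext with (f := fun N => w O - w (S N)); [exact Hpartial|].
  rewrite filterlim_C_eps. intros eps Heps.
  destruct (mul_pow_lt_eventually M x eps Hx Heps) as [N HN].
  exists N. intros n Hn.
  replace (w O - w (S n) - w O) with (- w (S n)) by ring. rewrite Cmod_opp.
  eapply Rle_lt_trans; [apply Hw | apply HN; lia].
Qed.

Lemma is_series_lin (a b : nat -> C) la lb c : is_series a la -> is_series b lb ->
  is_series (fun n => a n + c * b n) (la + c * lb).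
Proof.
  intros Ha Hb. apply (is_series_plus (K := C_AbsRing) (V := C_NormedModule)); [exact Ha|].
  apply (is_series_scal (K := C_AbsRing) (V := C_NormedModule)), Hb.
Qed.

Lemma Cmod_series_le (a : nat -> C) l (K x : R) : (0 <= x < 1)%R -> is_series a l ->
  (forall n, (Cmod (a n) <= K * x ^ n)%R) -> (Cmod l <= K / (1 - x))%R.
Proof.
  intros Hx Hl Ha.
  assert (HK : (0 <= K)%R) by (specialize (Ha O); simpl in Ha; pose proof (Cmod_ge_0 (a O)); lra).
  assert (Hpartial : forall N, (Cmod (sum_n a N) <= K * geom_sum x (S N))%R).
  { induction N as [|N IH].
    - rewrite sum_O. eapply Rle_trans; [apply Ha|]. right. unfold geom_sum. simpl. field. lra.
    - rewrite sum_Sn, (geom_sum_S x (S N)) by lra. unfold plus. simpl.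
      eapply Rle_trans; [apply Cmod_triangle|]. specialize (Ha (S N)). simpl in Ha. nra. }
  apply (Cmod_le_lim (sum_n a)); [exact Hl|]. intros N.
  eapply Rle_trans; [apply Hpartial|]. unfold Rdiv.
  apply Rmult_le_compat_l; [exact HK | apply geom_sum_bounds, Hx].
Qed.

Lemma is_series_geom_C q : (Cmod q < 1)%R -> is_series (cpow q) (/ (1 - q)).
Proof.
  intros Hq. assert (Hq1 : 1 - q <> 0) by (apply one_sub_neq0, Hq).
  replace (/ (1 - q)) with (cpow q 0 / (1 - q)) by (simpl; field; exact Hq1).
  apply (is_series_telescope _ (fun n => cpow q n / (1 - q)) (Cmod (/ (1 - q))) (Cmod q)).
  - split; [apply Cmod_ge_0 | exact Hq].
  - intros n. simpl. field. exact Hq1.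
  - intros n. unfold Cdiv. rewrite Cmod_mult, Cmod_cpow. right. ring.
Qed.

Definition seq_at0 (l : C) (n : nat) : C := match n with O => l | S _ => 0 end.

Lemma is_series_seq_at0 l : is_series (seq_at0 l) l.
Proof.
  apply (is_series_telescope _ (seq_at0 l) (Cmod l) 0); [lra | intros [|n]; simpl; ring |].
  intros [|n]; simpl; [lra | rewrite Cmod_0; lra].
Qed.

(** * Uniqueness for q-difference equations *)

Definition lipschitz_at_0 (f : C -> C) (l : C) : Prop :=
  exists d K : R, (0 < d)%R /\ forall w, (Cmod w < d)%R -> (Cmod (f w - l) <= K * Cmod w)%R.

Lemma lipschitz_at_0_sub f g l m :
  lipschitz_at_0 f l -> lipschitz_at_0 g m -> lipschitz_at_0 (fun z => f z - g z) (l - m).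
Proof.
  intros [df [Kf [Hdf Hf]]] [dg [Kg [Hdg Hg]]].
  exists (Rmin df dg), (Kf + Kg)%R. split; [apply Rmin_pos; assumption|]. intros w Hw.
  assert (H1 := Hf w (Rlt_le_trans _ _ _ Hw (Rmin_l _ _))).
  assert (H2 := Hg w (Rlt_le_trans _ _ _ Hw (Rmin_r _ _))).
  replace (f w - g w - (l - m)) with ((f w - l) + - (g w - m)) by ring.
  eapply Rle_trans; [apply Cmod_triangle|]. rewrite Cmod_opp. lra.
Qed.

Lemma series_lipschitz_at_0 (t : C -> nat -> C) (s : nat -> C) (S : C -> C) (l : C) (d K x : R) :
  (0 <= x < 1)%R -> (0 < d)%R -> is_series s l ->
  (forall w, (Cmod w < d)%R -> is_series (t w) (S w)) ->
  (forall w n, (Cmod w < d)%R -> (Cmod (t w n - s n) <= Cmod w * K * x ^ n)%R) ->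
  lipschitz_at_0 S l.
Proof.
  intros Hx Hd Hs Ht Hts. exists d, (K / (1 - x))%R. split; [exact Hd|]. intros w Hw.
  replace (K / (1 - x) * Cmod w)%R with (Cmod w * K / (1 - x))%R by (unfold Rdiv; ring).
  apply (Cmod_series_le (fun n => t w n - s n)); [exact Hx | | intros n; apply Hts, Hw].
  apply (is_series_minus (K := C_AbsRing) (V := C_NormedModule)); [apply Ht, Hw | exact Hs].
Qed.

Section QDifferenceUniqueness.
Variables (p : C) (r : R).
Hypothesis Hp : (Cmod p < 1)%R.
Local Notation pi := (Cmod p).

Let pi_bounds : (0 <= pi < 1)%R.
Proof. split; [apply Cmod_ge_0 | exact Hp]. Qed.

Let Cmod_scale_pow z k : Cmod (z * cpow p k) = (Cmod z * pi ^ k)%R.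
Proof. rewrite Cmod_mult, Cmod_cpow. reflexivity. Qed.

Let Cmod_scale_pow_le z k : (Cmod (z * cpow p k) <= Cmod z)%R.
Proof. apply Cmod_mul_le_l, Cmod_cpow_le1. lra. Qed.

Let Cmod_scale_le z : (Cmod (z * p) <= Cmod z)%R.
Proof. apply Cmod_mul_le_l. lra. Qed.

Let scale_eventually_small z d : (0 < d)%R -> exists k0, forall k, (k0 <= k)%nat -> (Cmod (z * cpow p k) < d)%R.
Proof.
  intros Hd. destruct (mul_pow_lt_eventually (Cmod z) pi d pi_bounds Hd) as [N HN].
  exists N. intros k Hk. rewrite Cmod_scale_pow. apply HN, Hk.
Qed.

Lemma scale_invariant_eq0 (u : C -> C) :
  (forall z, (Cmod z < r)%R -> u z = u (z * p)) -> lipschitz_at_0 u 0 ->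
  forall z, (Cmod z < r)%R -> u z = 0.
Proof.
  intros Hinv [d [K [Hd Hu]]] z Hz.
  assert (Hiter : forall k, u z = u (z * cpow p k)).
  { induction k as [|k IH]; [simpl; f_equal; ring|].
    rewrite IH, Hinv by (eapply Rle_lt_trans; [apply Cmod_scale_pow_le | exact Hz]).
    f_equal. simpl. ring. }
  apply Cmod_eq_0, (le_geometric_eq0 _ (K * Cmod z) pi pi_bounds (Cmod_ge_0 _)).
  destruct (scale_eventually_small z d Hd) as [k0 Hk0]. exists k0. intros k Hk.
  rewrite (Hiter k). specialize (Hu _ (Hk0 k Hk)).
  rewrite Csub_0_r, Cmod_scale_pow in Hu. lra.
Qed.

Lemma scale_recursion_propagate (a b D : C -> C) (d : R) :
  (forall z, (Cmod z < r)%R -> a z * D z = b z * D (z * p)) ->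
  (forall z, (Cmod z < r)%R -> a z <> 0) ->
  (0 < d)%R -> (forall w, (Cmod w < d)%R -> D w = 0) ->
  forall z, (Cmod z < r)%R -> D z = 0.
Proof.
  intros Hrec Ha Hd Hsmall z Hz.
  destruct (scale_eventually_small z d Hd) as [J HJ]. specialize (HJ J (le_n J)).
  revert z Hz HJ. induction J as [|J IH]; intros z Hz HJ.
  - apply Hsmall. simpl in HJ. rewrite Cmult_1_r in HJ. exact HJ.
  - assert (HDzp : D (z * p) = 0).
    { apply IH; [eapply Rle_lt_trans; [apply Cmod_scale_le | exact Hz]|].
      replace (z * p * cpow p J) with (z * cpow p (S J)) by (simpl; ring). exact HJ. }
    assert (H := Hrec z Hz). rewrite HDzp, Cmult_0_r in H.
    destruct (Ceq_dec (D z) 0) as [E | E]; [exact E|].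
    exfalso. exact (Cmult_neq_0 _ _ (Ha z Hz) E H).
Qed.

Lemma scale_recursion_eq0 (a b D : C -> C) :
  (forall z, (Cmod z < r)%R -> a z * D z = b z * D (z * p)) ->
  (forall z, (Cmod z < r)%R -> a z <> 0) ->
  (exists d, (0 < d)%R /\ forall w, (Cmod w < d)%R -> (Cmod (b w) <= Cmod (a w))%R) ->
  lipschitz_at_0 D 0 ->
  forall z, (Cmod z < r)%R -> D z = 0.
Proof.
  intros Hrec Ha [db [Hdb Hba]] [dD [K [HdD HD]]] z Hz.
  set (d := Rmin (Rmin db dD) r).
  assert (Hd : (0 < d)%R) by (repeat apply Rmin_pos; try assumption; pose proof (Cmod_ge_0 z); lra).
  assert (Hdb' : (d <= db)%R) by (eapply Rle_trans; apply Rmin_l).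
  assert (HdD' : (d <= dD)%R) by (eapply Rle_trans; [apply Rmin_l | apply Rmin_r]).
  assert (Hdr : (d <= r)%R) by apply Rmin_r.
  apply (scale_recursion_propagate a b D d Hrec Ha Hd); [|exact Hz].
  intros w Hw.
  assert (Hmono : forall k, (Cmod (D w) <= Cmod (D (w * cpow p k)%C))%R).
  { induction k as [|k IH]; [simpl; rewrite Cmult_1_r; lra|].
    eapply Rle_trans; [exact IH|].
    set (v := w * cpow p k).
    assert (Hv : (Cmod v < d)%R) by (eapply Rle_lt_trans; [apply Cmod_scale_pow_le | exact Hw]).
    replace (w * cpow p (S k)) with (v * p) by (unfold v; simpl; ring).
    assert (H := f_equal Cmod (Hrec v ltac:(lra))). rewrite !Cmod_mult in H.
    assert (Hav : (0 < Cmod (a v))%R) by (apply Cmod_gt_0, Ha; lra).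
    assert (Hbv := Hba v ltac:(lra)).
    pose proof (Cmod_ge_0 (D (v * p)%C)). pose proof (Cmod_ge_0 (D v)).
    apply Rmult_le_reg_l with (Cmod (a v)); nra. }
  apply Cmod_eq_0, (le_geometric_eq0 _ (K * Cmod w) pi pi_bounds (Cmod_ge_0 _)).
  exists O. intros k _. eapply Rle_trans; [apply (Hmono k)|].
  assert (H := HD (w * cpow p k) ltac:(eapply Rle_lt_trans; [apply Cmod_scale_pow_le | lra])).
  rewrite Csub_0_r, Cmod_scale_pow in H. lra.
Qed.

Let Cmod_affine_le a0 a1 w : (Cmod w <= 1)%R -> (Cmod (a0 + a1 * w) <= Cmod a0 + Cmod a1)%R.
Proof.
  intros Hw. eapply Rle_trans; [apply Cmod_triangle|]. rewrite Cmod_mult.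
  pose proof (Cmod_ge_0 a1). pose proof (Cmod_ge_0 w). nra.
Qed.

Lemma recursion_defect_lipschitz (F : C -> C) (a0 a1 b0 b1 c l : C) :
  lipschitz_at_0 F l -> a0 * l - b0 * l = c ->
  lipschitz_at_0 (fun z => (a0 + a1 * z) * F z - (b0 + b1 * z) * F (z * p) - c) 0.
Proof.
  intros [d [K [Hd HF]]] Hc.
  exists (Rmin d 1), ((Cmod a0 + Cmod a1 + Cmod b0 + Cmod b1) * Rabs K + Cmod (a1 - b1) * Cmod l)%R.
  split; [apply Rmin_pos; lra|]. intros w Hw.
  assert (Hw1 : (Cmod w <= 1)%R) by (pose proof (Rmin_r d 1); lra).
  assert (Hwp := Cmod_scale_le w).
  assert (HF' : forall v, (Cmod v <= Cmod w)%R -> (Cmod (F v - l) <= Rabs K * Cmod w)%R).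
  { intros v Hv. pose proof (Rmin_l d 1).
    eapply Rle_trans; [apply HF; lra|].
    pose proof (Rle_abs K). pose proof (Rabs_pos K). pose proof (Cmod_ge_0 v). nra. }
  replace ((a0 + a1 * w) * F w - (b0 + b1 * w) * F (w * p) - c - 0)
    with ((a0 + a1 * w) * (F w - l) + - ((b0 + b1 * w) * (F (w * p) - l)) + (a1 - b1) * l * w)
    by (rewrite <- Hc; ring).
  eapply Rle_trans; [apply Cmod_triangle|]. rewrite !Cmod_mult.
  eapply Rle_trans; [apply Rplus_le_compat_r, Cmod_triangle|]. rewrite Cmod_opp, !Cmod_mult.
  assert (H1 := HF' w (Rle_refl _)). assert (H2 := HF' (w * p) Hwp).
  assert (Ha := Cmod_affine_le a0 a1 w Hw1). assert (Hb := Cmod_affine_le b0 b1 w Hw1).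
  pose proof (Cmod_ge_0 (F w - l)). pose proof (Cmod_ge_0 (F (w * p) - l)).
  pose proof (Cmod_ge_0 (a0 + a1 * w)). pose proof (Cmod_ge_0 (b0 + b1 * w)).
  pose proof (Cmod_ge_0 (a1 - b1)). pose proof (Cmod_ge_0 l). pose proof (Cmod_ge_0 w). pose proof (Rabs_pos K).
  assert (Cmod (a0 + a1 * w) * Cmod (F w - l) <= (Cmod a0 + Cmod a1) * (Rabs K * Cmod w))%R
    by (apply Rmult_le_compat; assumption).
  assert (Cmod (b0 + b1 * w) * Cmod (F (w * p) - l)%C <= (Cmod b0 + Cmod b1) * (Rabs K * Cmod w))%R
    by (apply Rmult_le_compat; assumption).
  nra.
Qed.

Theorem q_difference_unique (F G : C -> C) (a0 a1 b0 b1 c l : C) :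
  (forall z, (Cmod z < r)%R ->
     (a0 + a1 * z) * F z - (b0 + b1 * z) * F (z * p) =
     (a0 + a1 * (z * p)) * F (z * p) - (b0 + b1 * (z * p)) * F (z * p * p)) ->
  (forall z, (Cmod z < r)%R -> (a0 + a1 * z) * G z - (b0 + b1 * z) * G (z * p) = c) ->
  (forall z, (Cmod z < r)%R -> a0 + a1 * z <> 0) ->
  (exists d, (0 < d)%R /\ forall w, (Cmod w < d)%R -> (Cmod (b0 + b1 * w) <= Cmod (a0 + a1 * w))%R) ->
  a0 * l - b0 * l = c -> lipschitz_at_0 F l -> lipschitz_at_0 G l ->
  forall z, (Cmod z < r)%R -> F z = G z.
Proof.
  intros HF HG Ha Hba Hc LF LG.
  set (uF := fun z => (a0 + a1 * z) * F z - (b0 + b1 * z) * F (z * p) - c).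
  assert (HuF : forall z, (Cmod z < r)%R -> uF z = 0).
  { apply scale_invariant_eq0; [|exact (recursion_defect_lipschitz F a0 a1 b0 b1 c l LF Hc)].
    intros z Hz. unfold uF. rewrite HF by exact Hz. reflexivity. }
  assert (LD := lipschitz_at_0_sub _ _ _ _ LF LG).
  replace (l - l) with (RtoC 0) in LD by ring.
  intros z Hz. apply Csub_eq0.
  apply (scale_recursion_eq0 (fun z => a0 + a1 * z) (fun z => b0 + b1 * z) (fun z => F z - G z));
    try assumption.
  intros v Hv. apply Csub_eq0. assert (H := HuF v Hv). unfold uF in H.
  transitivity (((a0 + a1 * v) * F v - (b0 + b1 * v) * F (v * p) - c)
                - ((a0 + a1 * v) * G v - (b0 + b1 * v) * G (v * p) - c)); [ring|].
  rewrite H, (HG v Hv). ring.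
Qed.

End QDifferenceUniqueness.

(* Closes a side condition [b <> 0] left by [field] from a hypothesis [a <> 0] with [a = b]
   provable by [ring]. *)
Ltac neq0_by_ring :=
  match goal with
  | H : ?a <> _ |- ?b <> _ =>
      let E := fresh in intro E; cbv beta in E; apply H; eapply eq_trans; [|exact E]; ring
  end.

Section Identities.
Variable q : C.
Hypothesis Hq : (Cmod q < 1)%R.
Local Notation pi := (Cmod q).

Let Hq1 : (Cmod q <= 1)%R.
Proof. lra. Qed.

Let pi_bounds : (0 <= pi < 1)%R.
Proof. split; [apply Cmod_ge_0 | exact Hq]. Qed.

Let Hqq : (Cmod (q * q) < 1)%R.
Proof. rewrite Cmod_mult. pose proof pi_bounds. nra. Qed.

Lemma qpoch_q_neq0 n : qpoch q (q * q) n <> 0.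
Proof.
  apply (proj1 (Cmod_inv_le_exp _ _ (Cmod_qpoch_ge q (q * q) pi Hqq (Rle_refl _) Hq n))).
Qed.

(** * The second identity *)

Definition lhs2 (z : C) (n : nat) : C :=
  cpow q n * (qpoch (- (z * cpow q (S n))) q n * qpoch_inf (- (z * cpow q (2 * n + 2))) (q * q)).

Definition rhs2 (z : C) (n : nat) : C :=
  cpow z n * cpow q (n * n + n) / qpoch q (q * q) (S n).

Lemma lhs2_succ z n :
  lhs2 z (S n) * (1 + z * cpow q (S n)) = q * (1 + z * q * (cpow q n * cpow q n)) * lhs2 z n.
Proof.
  unfold lhs2. rewrite (qpoch_inf_recl (- (z * cpow q (2 * n + 2))) _ Hqq).
  replace (- (z * cpow q (2 * n + 2)) * (q * q)) with (- (z * cpow q (2 * S n + 2)))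
    by (rewrite !cpow_double_add2; simpl; ring).
  set (B := qpoch_inf (- (z * cpow q (2 * S n + 2))) (q * q)).
  assert (Hsplit : (1 + z * cpow q (S n)) * qpoch (- (z * cpow q (S (S n)))) q (S n)
      = qpoch (- (z * cpow q (S n))) q n * (1 + z * cpow q (S n) * cpow q n)
        * (1 + z * cpow q (S n) * cpow q (S n))).
  { transitivity (qpoch (- (z * cpow q (S n))) q (S (S n))).
    - rewrite (qpoch_recl (- (z * cpow q (S n)))).
      replace (- (z * cpow q (S n)) * q) with (- (z * cpow q (S (S n))))
        by (simpl; ring). ring.
    - rewrite !qpoch_recr. ring. }
  transitivity (cpow q (S n) * B * ((1 + z * cpow q (S n)) * qpoch (- (z * cpow q (S (S n)))) q (S n)));
    [ring|].
  rewrite Hsplit, cpow_double_add2. simpl. ring.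
Qed.

Lemma lhs2_scale z n :
  lhs2 (z * (q * q)) n * ((1 + z * q * cpow q n) * (1 + z * q * q * cpow q n))
  = (1 + z * q * (cpow q n * cpow q n)) * lhs2 z n.
Proof.
  unfold lhs2. rewrite (qpoch_inf_recl (- (z * cpow q (2 * n + 2))) _ Hqq).
  replace (- (z * cpow q (2 * n + 2)) * (q * q)) with (- (z * (q * q) * cpow q (2 * n + 2))) by ring.
  set (B := qpoch_inf (- (z * (q * q) * cpow q (2 * n + 2))) (q * q)).
  assert (Hsplit : (1 + z * cpow q (S n)) * (1 + z * cpow q (S n) * q)
        * qpoch (- (z * (q * q) * cpow q (S n))) q n
      = qpoch (- (z * cpow q (S n))) q n * (1 + z * cpow q (S n) * cpow q n)
        * (1 + z * cpow q (S n) * cpow q (S n))).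
  { transitivity (qpoch (- (z * cpow q (S n))) q (S (S n))).
    - rewrite !qpoch_recl. replace (- (z * cpow q (S n)) * q * q) with (- (z * (q * q) * cpow q (S n)))
        by ring. ring.
    - rewrite !qpoch_recr. ring. }
  transitivity (cpow q n * B * ((1 + z * cpow q (S n)) * (1 + z * cpow q (S n) * q)
        * qpoch (- (z * (q * q) * cpow q (S n))) q n)); [simpl; ring|].
  rewrite Hsplit, cpow_double_add2. simpl. ring.
Qed.

Definition lhs2_cert (z X : C) : C :=
  z * (X - 1) * (q * q + q * q * q - q * X + z * (q * q * q * q * q) * X) /
  ((1 + z * q * X) * (1 + z * q * q * X) * (1 + z * q * q * q * X)).

Lemma lhs2_cert_identity z X T T1 Tp Tpp :
  1 + z * q * X <> 0 -> 1 + z * q * q * X <> 0 -> 1 + z * q * q * q * X <> 0 ->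
  1 + z * q * q * q * q * X <> 0 ->
  T1 * (1 + z * (q * X)) = q * (1 + z * q * (X * X)) * T ->
  Tp * ((1 + z * q * X) * (1 + z * q * q * X)) = (1 + z * q * (X * X)) * T ->
  Tpp * ((1 + z * (q * q) * q * X) * (1 + z * (q * q) * q * q * X)) = (1 + z * (q * q) * q * (X * X)) * Tp ->
  T - (1 + q + z * q * q) * Tp + q * (1 + z * q * q * q) * Tpp = lhs2_cert z X * T - lhs2_cert z (q * X) * T1.
Proof.
  intros h1 h2 h3 h4 e1 e2 e3.
  assert (f1 : T1 = q * (1 + z * q * (X * X)) * T / (1 + z * (q * X)))
    by (rewrite <- e1; field; neq0_by_ring).
  assert (f2 : Tp = (1 + z * q * (X * X)) * T / ((1 + z * q * X) * (1 + z * q * q * X)))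
    by (rewrite <- e2; field; split; neq0_by_ring).
  assert (f3 : Tpp = (1 + z * (q * q) * q * (X * X)) * Tp
                     / ((1 + z * (q * q) * q * X) * (1 + z * (q * q) * q * q * X)))
    by (rewrite <- e3; field; split; neq0_by_ring).
  rewrite f3, f2, f1. unfold lhs2_cert. field. repeat split; neq0_by_ring.
Qed.

Let half_le_Cmod_1_add y : (Cmod y <= / 2)%R -> (/ 2 <= Cmod (1 + y))%R.
Proof. intros Hy. pose proof (Cmod_1_add_ge y). lra. Qed.

Lemma Cmod_lhs2_le : exists M, forall z n, (Cmod z <= 1)%R -> (Cmod (lhs2 z n) <= M * pi ^ n)%R.
Proof.
  set (M := (exp (1 / (1 - pi)) * exp (1 / (1 - Cmod (q * q))))%R). exists M. intros z n Hz.
  unfold lhs2. rewrite !Cmod_mult, Cmod_cpow.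
  assert (HA := Cmod_qpoch_le (- (z * cpow q (S n))) q 1 Hq ltac:(Cmod_le_factor) n).
  assert (HB := Cmod_qpoch_inf_le (- (z * cpow q (2 * n + 2))) (q * q) 1 Hqq ltac:(Cmod_le_factor)).
  assert (HAB : (Cmod (qpoch (- (z * cpow q (S n))) q n) * Cmod (qpoch_inf (- (z * cpow q (2 * n + 2))) (q * q))
                 <= M)%R)
    by (apply Rmult_le_compat; auto using Cmod_ge_0).
  assert (0 <= pi ^ n)%R by (apply pow_le; lra). nra.
Qed.

Lemma Cmod_lhs2_sub_geom_le :
  exists K, forall w n, (Cmod w <= 1)%R -> (Cmod (lhs2 w n - cpow q n) <= Cmod w * K * pi ^ n)%R.
Proof.
  exists (exp (1 / (1 - pi)) * (exp (/ (1 - Cmod (q * q))) / (1 - Cmod (q * q)))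
          + exp (/ (1 - pi)) / (1 - pi))%R.
  intros w n Hw.
  assert (HA := Cmod_qpoch_le (- (w * cpow q (S n))) q 1 Hq ltac:(Cmod_le_factor) n).
  assert (HA1 := Cmod_qpoch_sub1_le (- (w * cpow q (S n))) q (Cmod w) Hq ltac:(Cmod_le_factor) Hw n).
  assert (HB1 := Cmod_qpoch_inf_sub1_le (- (w * cpow q (2 * n + 2))) (q * q) (Cmod w) Hqq
                   ltac:(Cmod_le_factor) Hw).
  unfold lhs2.
  set (A := qpoch (- (w * cpow q (S n))) q n) in *.
  set (B := qpoch_inf (- (w * cpow q (2 * n + 2))) (q * q)) in *.
  set (c1 := (exp (/ (1 - pi)) / (1 - pi))%R) in *.
  set (c2 := (exp (/ (1 - Cmod (q * q))) / (1 - Cmod (q * q)))%R) in *.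
  replace (cpow q n * (A * B) - cpow q n) with (cpow q n * (A * B - 1)) by ring.
  rewrite Cmod_mult, Cmod_cpow.
  assert (HAB : (Cmod (A * B - 1) <= Cmod w * (exp (1 / (1 - pi)) * c2 + c1))%R).
  { eapply Rle_trans; [apply Cmod_mul_sub1_le|].
    assert (Cmod A * Cmod (B - 1) <= exp (1 / (1 - pi)) * (Cmod w * c2))%R
      by (apply Rmult_le_compat; auto using Cmod_ge_0).
    lra. }
  assert (0 <= pi ^ n)%R by (apply pow_le; lra). nra.
Qed.

Definition lhs2_sum (z : C) : C := CSeries (lhs2 z).

Lemma is_series_lhs2 z : (Cmod z <= 1)%R -> is_series (lhs2 z) (lhs2_sum z).
Proof.
  intros Hz. destruct Cmod_lhs2_le as [M HM].
  apply (is_series_dominated _ M pi pi_bounds). intros n. apply HM, Hz.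
Qed.

Lemma lhs2_sum_lipschitz : lipschitz_at_0 lhs2_sum (/ (1 - q)).
Proof.
  destruct Cmod_lhs2_sub_geom_le as [K HK].
  apply (series_lipschitz_at_0 lhs2 (cpow q) lhs2_sum _ 1 K pi pi_bounds); [lra | apply is_series_geom_C, Hq | |].
  - intros w Hw. apply is_series_lhs2. lra.
  - intros w n Hw. apply HK. lra.
Qed.

Lemma Cmod_lhs2_cert_le z X : (Cmod z <= / 2)%R -> (Cmod X <= 1)%R -> (Cmod (lhs2_cert z X) <= 32)%R.
Proof.
  intros Hz HX. unfold lhs2_cert. replace 32%R with (4 / / 8)%R by field.
  apply Cmod_div_le; [lra| |].
  - rewrite !Cmod_mult.
    assert (HX1 : (Cmod (X - 1) <= 1 + 1)%R) by (apply Cmod_sub_le; Cmod_le1).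
    assert (HN : (Cmod (q * q + q * q * q - q * X + z * (q * q * q * q * q) * X) <= 1 + 1 + 1 + 1)%R).
    { apply Cmod_add_le; [apply Cmod_sub_le; [apply Cmod_add_le|]|]; Cmod_le1. }
    pose proof (Cmod_ge_0 z). pose proof (Cmod_ge_0 (X - 1)).
    pose proof (Cmod_ge_0 (q * q + q * q * q - q * X + z * (q * q * q * q * q) * X)).
    assert (Cmod z * Cmod (X - 1) <= / 2 * 2)%R by (apply Rmult_le_compat; lra).
    nra.
  - rewrite !Cmod_mult.
    assert (H1 := half_le_Cmod_1_add (z * q * X) ltac:(Cmod_le_factor)).
    assert (H2 := half_le_Cmod_1_add (z * q * q * X) ltac:(Cmod_le_factor)).
    assert (H3 := half_le_Cmod_1_add (z * q * q * q * X) ltac:(Cmod_le_factor)).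
    assert (/ 4 <= Cmod (1 + z * q * X) * Cmod (1 + z * q * q * X))%R by nra.
    nra.
Qed.

Lemma lhs2_sum_recursion z : (Cmod z <= / 2)%R ->
  lhs2_sum z - (1 + q + z * q * q) * lhs2_sum (z * (q * q))
  + q * (1 + z * q * q * q) * lhs2_sum (z * (q * q) * (q * q)) = 0.
Proof.
  intros Hz.
  assert (Hz2 : (Cmod (z * (q * q)) <= / 2)%R) by Cmod_le_factor.
  assert (Hz4 : (Cmod (z * (q * q) * (q * q)) <= / 2)%R) by Cmod_le_factor.
  assert (Hlin := is_series_lin _ _ _ _ (q * (1 + z * q * q * q))
    (is_series_lin _ _ _ _ (- (1 + q + z * q * q))
       (is_series_lhs2 z ltac:(lra)) (is_series_lhs2 (z * (q * q)) ltac:(lra)))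
    (is_series_lhs2 (z * (q * q) * (q * q)) ltac:(lra))).
  destruct Cmod_lhs2_le as [M HM].
  assert (Htel : is_series (fun n => lhs2 z n + - (1 + q + z * q * q) * lhs2 (z * (q * q)) n
                                     + q * (1 + z * q * q * q) * lhs2 (z * (q * q) * (q * q)) n)
                           (lhs2_cert z (cpow q 0) * lhs2 z 0)).
  { apply (is_series_telescope _ (fun n => lhs2_cert z (cpow q n) * lhs2 z n) (32 * M) pi pi_bounds).
    - intros n.
      transitivity (lhs2 z n - (1 + q + z * q * q) * lhs2 (z * (q * q)) n
                    + q * (1 + z * q * q * q) * lhs2 (z * (q * q) * (q * q)) n); [ring|].
      apply lhs2_cert_identity;
        [ apply one_add_neq0, (Rle_lt_trans _ (/ 2)); [Cmod_le_factor | lra] ..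
        | exact (lhs2_succ z n) | exact (lhs2_scale z n) | exact (lhs2_scale (z * (q * q)) n) ].
    - intros n. rewrite Cmod_mult.
      assert (H1 := Cmod_lhs2_cert_le z (cpow q n) Hz ltac:(Cmod_le1)).
      assert (H2 := HM z n ltac:(lra)).
      replace (32 * M * pi ^ n)%R with (32 * (M * pi ^ n))%R by ring.
      apply Rmult_le_compat; auto using Cmod_ge_0. }
  replace (lhs2_cert z (cpow q 0) * lhs2 z 0) with (RtoC 0) in Htel by (unfold lhs2_cert, Cdiv; simpl; ring).
  transitivity (lhs2_sum z + - (1 + q + z * q * q) * lhs2_sum (z * (q * q))
                + q * (1 + z * q * q * q) * lhs2_sum (z * (q * q) * (q * q))); [ring|].
  exact (is_series_C_unique _ _ _ Hlin Htel).
Qed.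

Lemma rhs2_scale z n : rhs2 (z * (q * q)) n = rhs2 z n * (cpow q n * cpow q n).
Proof. unfold rhs2. rewrite !cpow_mul. unfold Cdiv. ring. Qed.

Lemma rhs2_succ z n :
  rhs2 z (S n) * (1 - q * (q * q * (cpow q n * cpow q n))) = rhs2 z n * (z * (q * q * (cpow q n * cpow q n))).
Proof.
  unfold rhs2.
  replace (S n * S n + S n)%nat with ((n * n + n) + (2 * n + 2))%nat by lia.
  rewrite cpow_add, cpow_double_add2, (qpoch_recr q (q * q) (S n)).
  change (cpow z (S n)) with (z * cpow z n).
  change (cpow (q * q) (S n)) with (q * q * cpow (q * q) n). rewrite cpow_mul.
  assert (h1 := qpoch_q_neq0 (S n)).
  assert (h2 : 1 - q * (q * q * (cpow q n * cpow q n)) <> 0)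
    by (apply one_sub_neq0, (Rle_lt_trans _ (Cmod q)); [Cmod_le_factor | exact Hq]).
  field. split; neq0_by_ring.
Qed.

Lemma Cmod_rhs2_le : exists M, (0 <= M)%R /\ forall z n, (Cmod (rhs2 z n) <= Cmod z ^ n * (M * pi ^ n))%R.
Proof.
  set (M := exp (pi / (1 - pi) / (1 - Cmod (q * q)))).
  exists M. split; [left; apply exp_pos|]. intros z n.
  assert (Hinv := proj2 (Cmod_inv_le_exp _ _ (Cmod_qpoch_ge q (q * q) pi Hqq (Rle_refl _) Hq (S n)))).
  fold M in Hinv. unfold rhs2, Cdiv. rewrite !Cmod_mult, !Cmod_cpow.
  assert (Hpow : (pi ^ (n * n + n) <= pi ^ n)%R) by (apply pow_le_decr; [lra | lia]).
  assert (0 <= Cmod z ^ n)%R by (apply pow_le, Cmod_ge_0).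
  assert (0 <= pi ^ (n * n + n))%R by (apply pow_le; lra).
  assert (Cmod (/ qpoch q (q * q) (S n)) * pi ^ (n * n + n) <= M * pi ^ n)%R
    by (apply Rmult_le_compat; auto using Cmod_ge_0).
  assert (0 <= Cmod z ^ n * pi ^ (n * n + n))%R by (apply Rmult_le_pos; assumption).
  pose proof (Cmod_ge_0 (/ qpoch q (q * q) (S n))). nra.
Qed.

Definition rhs2_sum (z : C) : C := CSeries (rhs2 z).

Let Cmod_rhs2_le_geom : exists M, forall z n, (Cmod z <= 1)%R -> (Cmod (rhs2 z n) <= M * pi ^ n)%R.
Proof.
  destruct Cmod_rhs2_le as [M [HM0 HM]]. exists M. intros z n Hz.
  eapply Rle_trans; [apply HM|]. apply Rmult_le_one_l.
  - apply pow_bounds. split; [apply Cmod_ge_0 | exact Hz].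
  - apply Rmult_le_pos; [exact HM0 | apply pow_le; lra].
Qed.

Lemma is_series_rhs2 z : (Cmod z <= 1)%R -> is_series (rhs2 z) (rhs2_sum z).
Proof.
  intros Hz. destruct Cmod_rhs2_le_geom as [M HM].
  apply (is_series_dominated _ M pi pi_bounds). intros n. apply HM, Hz.
Qed.

Lemma rhs2_0 z : rhs2 z 0 = / (1 - q).
Proof.
  assert (h := one_sub_neq0 q Hq). unfold rhs2. simpl. field. neq0_by_ring.
Qed.

Lemma rhs2_sum_lipschitz : lipschitz_at_0 rhs2_sum (/ (1 - q)).
Proof.
  destruct Cmod_rhs2_le as [M [HM0 HM]].
  apply (series_lipschitz_at_0 rhs2 (seq_at0 (/ (1 - q))) rhs2_sum _ 1 M pi pi_bounds);
    [lra | apply is_series_seq_at0 | intros w Hw; apply is_series_rhs2; lra |].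
  intros w [|n] Hw; simpl seq_at0.
  - rewrite rhs2_0. replace (/ (1 - q) - / (1 - q)) with (RtoC 0) by ring. rewrite Cmod_0.
    pose proof (Cmod_ge_0 w). simpl. nra.
  - rewrite Csub_0_r. eapply Rle_trans; [apply HM|].
    change (Cmod w ^ S n)%R with (Cmod w * Cmod w ^ n)%R.
    rewrite Rmult_assoc, (Rmult_assoc (Cmod w)). apply Rmult_le_compat_l; [apply Cmod_ge_0|].
    apply Rmult_le_one_l; [apply pow_bounds; split; [apply Cmod_ge_0 | lra]|].
    apply Rmult_le_pos; [exact HM0 | apply pow_le; lra].
Qed.

Lemma rhs2_sum_recursion z : (Cmod z <= / 2)%R -> rhs2_sum z - q * (1 + z * q) * rhs2_sum (z * (q * q)) = 1.
Proof.
  intros Hz.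
  assert (Hz2 : (Cmod (z * (q * q)) <= / 2)%R) by Cmod_le_factor.
  assert (Hlin := is_series_lin _ _ _ _ (- (q * (1 + z * q)))
    (is_series_rhs2 z ltac:(lra)) (is_series_rhs2 (z * (q * q)) ltac:(lra))).
  destruct Cmod_rhs2_le_geom as [M HM].
  assert (Htel : is_series (fun n => rhs2 z n + - (q * (1 + z * q)) * rhs2 (z * (q * q)) n)
                           ((1 - q * (cpow q 0 * cpow q 0)) * rhs2 z 0)).
  { apply (is_series_telescope _ (fun n => (1 - q * (cpow q n * cpow q n)) * rhs2 z n) (2 * M) pi pi_bounds).
    - intros n. rewrite rhs2_scale. change (cpow q (S n)) with (q * cpow q n).
      replace ((1 - q * (q * cpow q n * (q * cpow q n))) * rhs2 z (S n))
        with (rhs2 z (S n) * (1 - q * (q * q * (cpow q n * cpow q n)))) by ring.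
      rewrite rhs2_succ. ring.
    - intros n. rewrite Cmod_mult.
      assert (H1 : (Cmod (1 - q * (cpow q n * cpow q n)) <= 1 + 1)%R) by (apply Cmod_sub_le; Cmod_le1).
      assert (H2 := HM z n ltac:(lra)).
      replace (2 * M * pi ^ n)%R with ((1 + 1) * (M * pi ^ n))%R by ring.
      apply Rmult_le_compat; auto using Cmod_ge_0. }
  replace ((1 - q * (cpow q 0 * cpow q 0)) * rhs2 z 0) with (RtoC 1) in Htel
    by (rewrite rhs2_0; simpl; field; apply one_sub_neq0, Hq).
  transitivity (rhs2_sum z + - (q * (1 + z * q)) * rhs2_sum (z * (q * q))); [ring|].
  exact (is_series_C_unique _ _ _ Hlin Htel).
Qed.

Lemma second_identity z : (Cmod z < / 2)%R -> exists T, is_series (lhs2 z) T /\ is_series (rhs2 z) T.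
Proof.
  intros Hz. exists (rhs2_sum z). split; [|apply is_series_rhs2; lra].
  replace (rhs2_sum z) with (lhs2_sum z); [apply is_series_lhs2; lra|].
  apply (q_difference_unique (q * q) (/ 2) Hqq lhs2_sum rhs2_sum 1 0 q (q * q) 1 (/ (1 - q)));
    [| | | | | apply lhs2_sum_lipschitz | apply rhs2_sum_lipschitz | exact Hz].
  - intros w Hw. apply Csub_eq0.
    transitivity (lhs2_sum w - (1 + q + w * q * q) * lhs2_sum (w * (q * q))
                  + q * (1 + w * q * q * q) * lhs2_sum (w * (q * q) * (q * q))); [ring|].
    apply lhs2_sum_recursion. lra.
  - intros w Hw. transitivity (rhs2_sum w - q * (1 + w * q) * rhs2_sum (w * (q * q))); [ring|].
    apply rhs2_sum_recursion. lra.
  - intros w _. replace (1 + 0 * w) with (RtoC 1) by ring. exact C1_nz.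
  - exists (1 - pi)%R. split; [lra|]. intros w Hw.
    replace (1 + 0 * w) with (RtoC 1) by ring. replace (q + q * q * w) with (q + w * (q * q)) by ring.
    rewrite Cmod_1. apply (Rle_trans _ (pi + (1 - pi))); [apply Cmod_add_le; [lra | Cmod_le_factor] | lra].
  - field. apply one_sub_neq0, Hq.
Qed.

(** * The first identity *)

Definition lhs1 (z : C) (m : nat) : C :=
  let n := S m in
  cpow q n / (qpoch (z * cpow q n) q (S n) * qpoch_inf (z * cpow q (2 * n + 2)) (q * q)).

Definition lhs1_den (z : C) (m : nat) : C :=
  qpoch (z * cpow q (S m)) q (S (S m)) * qpoch_inf (z * cpow q (2 * S m + 2)) (q * q).

Lemma lhs1_eq z m : lhs1 z m = cpow q (S m) / lhs1_den z m.
Proof. reflexivity. Qed.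

Lemma lhs1_den_succ z m :
  (1 - z * cpow q (S m)) * lhs1_den z (S m) = lhs1_den z m * (1 - z * q * (cpow q (S m) * cpow q (S m))).
Proof.
  unfold lhs1_den. set (Y := cpow q (S m)).
  rewrite (qpoch_inf_recl (z * cpow q (2 * S m + 2)) _ Hqq).
  replace (z * cpow q (2 * S m + 2) * (q * q)) with (z * cpow q (2 * S (S m) + 2))
    by (rewrite !cpow_double_add2; simpl; ring).
  set (B := qpoch_inf (z * cpow q (2 * S (S m) + 2)) (q * q)).
  assert (Hsplit : (1 - z * Y) * qpoch (z * cpow q (S (S m))) q (S (S (S m)))
      = qpoch (z * Y) q (S (S m)) * (1 - z * Y * cpow q (S (S m))) * (1 - z * Y * cpow q (S (S (S m))))).
  { rewrite <- !qpoch_recr, (qpoch_recl (z * Y)).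
    replace (z * Y * q) with (z * cpow q (S (S m))) by (unfold Y; simpl; ring). reflexivity. }
  transitivity (B * ((1 - z * Y) * qpoch (z * cpow q (S (S m))) q (S (S (S m))))); [ring|].
  rewrite Hsplit. unfold Y. rewrite cpow_double_add2. simpl. ring.
Qed.

Lemma lhs1_den_scale z m :
  (1 - z * cpow q (S m)) * (1 - z * q * cpow q (S m)) * lhs1_den (z * (q * q)) m
  = lhs1_den z m * (1 - z * q * (cpow q (S m) * cpow q (S m))).
Proof.
  unfold lhs1_den. set (Y := cpow q (S m)).
  rewrite (qpoch_inf_recl (z * cpow q (2 * S m + 2)) _ Hqq).
  replace (z * cpow q (2 * S m + 2) * (q * q)) with (z * (q * q) * cpow q (2 * S m + 2)) by ring.
  set (B := qpoch_inf (z * (q * q) * cpow q (2 * S m + 2)) (q * q)).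
  assert (Hsplit : (1 - z * Y) * (1 - z * q * Y) * qpoch (z * (q * q) * Y) q (S (S m))
      = qpoch (z * Y) q (S (S m)) * (1 - z * Y * cpow q (S (S m))) * (1 - z * Y * cpow q (S (S (S m))))).
  { rewrite <- !qpoch_recr, (qpoch_recl (z * Y)), (qpoch_recl (z * Y * q)).
    replace (z * Y * q * q) with (z * (q * q) * Y) by ring. ring. }
  transitivity (B * ((1 - z * Y) * (1 - z * q * Y) * qpoch (z * (q * q) * Y) q (S (S m)))); [ring|].
  rewrite Hsplit. unfold Y. rewrite cpow_double_add2. simpl. ring.
Qed.

Let Cmod_lhs1_den_factors z m : (Cmod z <= / 2)%R ->
  (exp (- (/ 2 / (1 - / 2) / (1 - pi))) <= Cmod (qpoch (z * cpow q (S m)) q (S (S m))))%R /\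
  (exp (- (/ 2 / (1 - / 2) / (1 - Cmod (q * q)))) <= Cmod (qpoch_inf (z * cpow q (2 * S m + 2)) (q * q)))%R.
Proof.
  intros Hz. split.
  - apply (Cmod_qpoch_ge _ q (/ 2) Hq); [Cmod_le_factor | lra].
  - apply (Cmod_qpoch_inf_ge _ (q * q) (/ 2) Hqq); [Cmod_le_factor | lra].
Qed.

Lemma Cmod_lhs1_den_inv_le :
  exists M, forall z m, (Cmod z <= / 2)%R -> lhs1_den z m <> 0 /\ (Cmod (/ lhs1_den z m) <= M)%R.
Proof.
  set (t := (/ 2 / (1 - / 2) / (1 - pi) + / 2 / (1 - / 2) / (1 - Cmod (q * q)))%R).
  exists (exp t). intros z m Hz. apply Cmod_inv_le_exp.
  destruct (Cmod_lhs1_den_factors z m Hz) as [HA HB].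
  unfold lhs1_den, t. rewrite (Cmod_mult (qpoch _ _ _)), Ropp_plus_distr, exp_plus.
  apply Rmult_le_compat; [left; apply exp_pos | left; apply exp_pos | exact HA | exact HB].
Qed.

Lemma Cmod_lhs1_den_sub1_le : exists K, forall w m, (Cmod w <= 1)%R -> (Cmod (lhs1_den w m - 1) <= Cmod w * K)%R.
Proof.
  exists (exp (1 / (1 - pi)) * (exp (/ (1 - Cmod (q * q))) / (1 - Cmod (q * q)))
          + exp (/ (1 - pi)) / (1 - pi))%R.
  intros w m Hw.
  assert (HA := Cmod_qpoch_le (w * cpow q (S m)) q 1 Hq ltac:(Cmod_le_factor) (S (S m))).
  assert (HA1 := Cmod_qpoch_sub1_le (w * cpow q (S m)) q (Cmod w) Hq ltac:(Cmod_le_factor) Hw (S (S m))).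
  assert (HB1 := Cmod_qpoch_inf_sub1_le (w * cpow q (2 * S m + 2)) (q * q) (Cmod w) Hqq
                   ltac:(Cmod_le_factor) Hw).
  unfold lhs1_den.
  set (A := qpoch (w * cpow q (S m)) q (S (S m))) in *.
  set (B := qpoch_inf (w * cpow q (2 * S m + 2)) (q * q)) in *.
  set (c1 := (exp (/ (1 - pi)) / (1 - pi))%R) in *.
  set (c2 := (exp (/ (1 - Cmod (q * q))) / (1 - Cmod (q * q)))%R) in *.
  eapply Rle_trans; [apply Cmod_mul_sub1_le|].
  assert (Cmod A * Cmod (B - 1) <= exp (1 / (1 - pi)) * (Cmod w * c2))%R
    by (apply Rmult_le_compat; auto using Cmod_ge_0).
  lra.
Qed.

Lemma Cmod_lhs1_le : exists M, forall z m, (Cmod z <= / 2)%R -> (Cmod (lhs1 z m) <= M * pi ^ m)%R.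
Proof.
  destruct Cmod_lhs1_den_inv_le as [M HM]. exists M. intros z m Hz.
  destruct (HM z m Hz) as [_ Hinv].
  rewrite lhs1_eq. unfold Cdiv. rewrite Cmod_mult, Cmod_cpow.
  assert (pi ^ S m <= pi ^ m)%R by (apply pow_le_decr; [lra | lia]).
  assert (0 <= pi ^ S m)%R by (apply pow_le; lra).
  rewrite Rmult_comm. apply Rmult_le_compat; auto using Cmod_ge_0.
Qed.

Lemma Cmod_lhs1_sub_geom_le :
  exists K, forall w m, (Cmod w <= / 2)%R -> (Cmod (lhs1 w m - cpow q (S m)) <= Cmod w * K * pi ^ m)%R.
Proof.
  destruct Cmod_lhs1_den_inv_le as [M HM]. destruct Cmod_lhs1_den_sub1_le as [K HK].
  exists (K * M)%R. intros w m Hw.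
  destruct (HM w m Hw) as [Hne Hinv]. assert (H1 := HK w m ltac:(lra)).
  rewrite lhs1_eq.
  replace (cpow q (S m) / lhs1_den w m - cpow q (S m))
    with (- (cpow q (S m) * (lhs1_den w m - 1) * / lhs1_den w m)) by (field; exact Hne).
  rewrite Cmod_opp, !Cmod_mult, Cmod_cpow.
  assert (pi ^ S m <= pi ^ m)%R by (apply pow_le_decr; [lra | lia]).
  assert (0 <= pi ^ S m)%R by (apply pow_le; lra).
  assert (Cmod (lhs1_den w m - 1) * Cmod (/ lhs1_den w m) <= Cmod w * K * M)%R
    by (apply Rmult_le_compat; auto using Cmod_ge_0).
  assert (0 <= Cmod (lhs1_den w m - 1) * Cmod (/ lhs1_den w m))%R
    by (apply Rmult_le_pos; apply Cmod_ge_0).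
  replace (Cmod w * (K * M) * pi ^ m)%R with (pi ^ m * (Cmod w * K * M))%R by ring.
  rewrite Rmult_assoc. apply Rmult_le_compat; assumption.
Qed.

Definition lhs1_sum (z : C) : C := CSeries (lhs1 z).

Lemma is_series_lhs1 z : (Cmod z <= / 2)%R -> is_series (lhs1 z) (lhs1_sum z).
Proof.
  intros Hz. destruct Cmod_lhs1_le as [M HM].
  apply (is_series_dominated _ M pi pi_bounds). intros n. apply HM, Hz.
Qed.

Lemma lhs1_sum_lipschitz : lipschitz_at_0 lhs1_sum (q / (1 - q)).
Proof.
  destruct Cmod_lhs1_sub_geom_le as [K HK].
  apply (series_lipschitz_at_0 lhs1 (fun m => cpow q (S m)) lhs1_sum _ (/ 2) K pi pi_bounds); [lra | | |].
  - apply (is_series_scal (K := C_AbsRing) (V := C_NormedModule) q), is_series_geom_C, Hq.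
  - intros w Hw. apply is_series_lhs1. lra.
  - intros w n Hw. apply HK. lra.
Qed.

Lemma lhs1_succ z m : (Cmod z <= / 2)%R ->
  lhs1 z (S m) * (1 - z * q * (cpow q (S m) * cpow q (S m))) = q * (1 - z * cpow q (S m)) * lhs1 z m.
Proof.
  intros Hz. destruct Cmod_lhs1_den_inv_le as [M HM].
  destruct (HM z m Hz) as [h1 _]. destruct (HM z (S m) Hz) as [h2 _].
  assert (E := lhs1_den_succ z m). rewrite !lhs1_eq.
  set (Y := cpow q (S m)) in *.
  assert (Hs : 1 - z * q * (Y * Y) = (1 - z * Y) * lhs1_den z (S m) / lhs1_den z m)
    by (rewrite E; field; exact h1).
  rewrite Hs. change (cpow q (S (S m))) with (q * Y). field. split; assumption.
Qed.

Lemma lhs1_scale z m : (Cmod z <= / 2)%R ->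
  lhs1 (z * (q * q)) m * (1 - z * q * (cpow q (S m) * cpow q (S m)))
  = (1 - z * cpow q (S m)) * (1 - z * q * cpow q (S m)) * lhs1 z m.
Proof.
  intros Hz. destruct Cmod_lhs1_den_inv_le as [M HM].
  destruct (HM z m Hz) as [h1 _]. destruct (HM (z * (q * q)) m ltac:(Cmod_le_factor)) as [h2 _].
  assert (E := lhs1_den_scale z m). rewrite !lhs1_eq.
  set (Y := cpow q (S m)) in *.
  assert (Hs : 1 - z * q * (Y * Y) = (1 - z * Y) * (1 - z * q * Y) * lhs1_den (z * (q * q)) m / lhs1_den z m)
    by (rewrite E; field; exact h1).
  rewrite Hs. field. split; assumption.
Qed.

Definition lhs1_cert (z Y : C) : C :=
  z * (Y - q) * (1 + q - q * (1 + z) * Y) / (1 - z * q * (Y * Y)).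

Lemma lhs1_cert_identity z Y T T1 Tp Tpp :
  1 - z * q * (Y * Y) <> 0 -> 1 - z * q * q * q * (Y * Y) <> 0 ->
  T1 * (1 - z * q * (Y * Y)) = q * (1 - z * Y) * T ->
  Tp * (1 - z * q * (Y * Y)) = (1 - z * Y) * (1 - z * q * Y) * T ->
  Tpp * (1 - z * (q * q) * q * (Y * Y)) = (1 - z * (q * q) * Y) * (1 - z * (q * q) * q * Y) * Tp ->
  (1 - z * q) * T - (1 + q - z * q * q * q) * Tp + q * Tpp = lhs1_cert z Y * T - lhs1_cert z (q * Y) * T1.
Proof.
  intros h1 h2 e1 e2 e3.
  assert (f1 : T1 = q * (1 - z * Y) * T / (1 - z * q * (Y * Y)))
    by (rewrite <- e1; field; neq0_by_ring).
  assert (f2 : Tp = (1 - z * Y) * (1 - z * q * Y) * T / (1 - z * q * (Y * Y)))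
    by (rewrite <- e2; field; neq0_by_ring).
  assert (f3 : Tpp = (1 - z * (q * q) * Y) * (1 - z * (q * q) * q * Y) * Tp / (1 - z * (q * q) * q * (Y * Y)))
    by (rewrite <- e3; field; neq0_by_ring).
  rewrite f3, f2, f1. unfold lhs1_cert. field. split; neq0_by_ring.
Qed.

Lemma Cmod_lhs1_cert_le z Y : (Cmod z <= / 2)%R -> (Cmod Y <= 1)%R -> (Cmod (lhs1_cert z Y) <= 8)%R.
Proof.
  intros Hz HY. unfold lhs1_cert. replace 8%R with (4 / / 2)%R by field.
  apply Cmod_div_le; [lra| |].
  - rewrite !Cmod_mult.
    assert (HYq : (Cmod (Y - q) <= 1 + 1)%R) by (apply Cmod_sub_le; Cmod_le1).
    assert (HN : (Cmod (1 + q - q * (1 + z) * Y) <= 1 + 1 + 1 + 1)%R).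
    { replace (1 + q - q * (1 + z) * Y) with (1 + q - q * Y - z * q * Y) by ring.
      apply Cmod_sub_le; [apply Cmod_sub_le; [apply Cmod_add_le|]|]; Cmod_le1. }
    pose proof (Cmod_ge_0 z). pose proof (Cmod_ge_0 (Y - q)).
    pose proof (Cmod_ge_0 (1 + q - q * (1 + z) * Y)).
    assert (Cmod z * Cmod (Y - q) <= / 2 * 2)%R by (apply Rmult_le_compat; lra).
    nra.
  - pose proof (Cmod_1_sub_ge (z * q * (Y * Y))).
    assert ((Cmod (z * q * (Y * Y)) <= / 2)%R) by Cmod_le_factor. lra.
Qed.

Lemma lhs1_sum_recursion z : (Cmod z <= / 2)%R ->
  (1 - z * q) * lhs1_sum z - (1 + q - z * q * q * q) * lhs1_sum (z * (q * q))
  + q * lhs1_sum (z * (q * q) * (q * q)) = 0.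
Proof.
  intros Hz.
  assert (Hz2 : (Cmod (z * (q * q)) <= / 2)%R) by Cmod_le_factor.
  assert (Hz4 : (Cmod (z * (q * q) * (q * q)) <= / 2)%R) by Cmod_le_factor.
  assert (H0 : is_series (fun n => (1 - z * q) * lhs1 z n) ((1 - z * q) * lhs1_sum z))
    by exact (is_series_scal (K := C_AbsRing) (V := C_NormedModule) _ _ _ (is_series_lhs1 z Hz)).
  assert (Hlin := is_series_lin _ _ _ _ q
    (is_series_lin _ _ _ _ (- (1 + q - z * q * q * q)) H0 (is_series_lhs1 (z * (q * q)) Hz2))
    (is_series_lhs1 (z * (q * q) * (q * q)) Hz4)).
  destruct Cmod_lhs1_le as [M HM].
  assert (Htel : is_series (fun n => (1 - z * q) * lhs1 z n + - (1 + q - z * q * q * q) * lhs1 (z * (q * q)) n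
                                     + q * lhs1 (z * (q * q) * (q * q)) n)
                           (lhs1_cert z (cpow q 1) * lhs1 z 0)).
  { apply (is_series_telescope _ (fun n => lhs1_cert z (cpow q (S n)) * lhs1 z n) (8 * M) pi pi_bounds).
    - intros n.
      transitivity ((1 - z * q) * lhs1 z n - (1 + q - z * q * q * q) * lhs1 (z * (q * q)) n
                    + q * lhs1 (z * (q * q) * (q * q)) n); [ring|].
      apply lhs1_cert_identity;
        [ apply one_sub_neq0, (Rle_lt_trans _ (/ 2)); [Cmod_le_factor | lra] ..
        | exact (lhs1_succ z n Hz) | exact (lhs1_scale z n Hz) | exact (lhs1_scale (z * (q * q)) n Hz2) ].
    - intros n. rewrite Cmod_mult.
      assert (H1 := Cmod_lhs1_cert_le z (cpow q (S n)) Hz ltac:(Cmod_le1)).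
      assert (H2 := HM z n Hz).
      replace (8 * M * pi ^ n)%R with (8 * (M * pi ^ n))%R by ring.
      apply Rmult_le_compat; auto using Cmod_ge_0. }
  replace (lhs1_cert z (cpow q 1) * lhs1 z 0) with (RtoC 0) in Htel by (unfold lhs1_cert, Cdiv; simpl; ring).
  transitivity ((1 - z * q) * lhs1_sum z + - (1 + q - z * q * q * q) * lhs1_sum (z * (q * q))
                + q * lhs1_sum (z * (q * q) * (q * q))); [ring|].
  exact (is_series_C_unique _ _ _ Hlin Htel).
Qed.

Definition rhs1 (z : C) (n : nat) : C :=
  cpow z n * cpow q (2 * n * n + 2 * n + 1) / (qpoch q (q * q) (S n) * qpoch (z * q) (q * q) (S n)).

Let Cmod_qpoch_zq_ge z k : (Cmod z <= / 2)%R ->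
  (exp (- (/ 2 / (1 - / 2) / (1 - Cmod (q * q)))) <= Cmod (qpoch (z * q) (q * q) k))%R.
Proof. intros Hz. apply (Cmod_qpoch_ge _ (q * q) (/ 2) Hqq); [Cmod_le_factor | lra]. Qed.

Let qpoch_zq_neq0 z k : (Cmod z <= / 2)%R -> qpoch (z * q) (q * q) k <> 0.
Proof. intros Hz. exact (proj1 (Cmod_inv_le_exp _ _ (Cmod_qpoch_zq_ge z k Hz))). Qed.

Lemma Cmod_rhs1_le :
  exists M, (0 <= M)%R /\ forall z n, (Cmod z <= / 2)%R -> (Cmod (rhs1 z n) <= Cmod z ^ n * (M * pi ^ n))%R.
Proof.
  set (t := (pi / (1 - pi) / (1 - Cmod (q * q)) + / 2 / (1 - / 2) / (1 - Cmod (q * q)))%R).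
  exists (exp t). split; [left; apply exp_pos|]. intros z n Hz.
  assert (HQ := Cmod_qpoch_ge q (q * q) pi Hqq (Rle_refl _) Hq (S n)).
  assert (HP := Cmod_qpoch_zq_ge z (S n) Hz).
  assert (Hinv : (Cmod (/ (qpoch q (q * q) (S n) * qpoch (z * q) (q * q) (S n))) <= exp t)%R).
  { apply Cmod_inv_le_exp. unfold t.
    rewrite (Cmod_mult (qpoch q _ _)), Ropp_plus_distr, exp_plus.
    apply Rmult_le_compat; [left; apply exp_pos | left; apply exp_pos | exact HQ | exact HP]. }
  unfold rhs1, Cdiv. rewrite (Cmod_mult (cpow z n * _)), (Cmod_mult (cpow z n)), !Cmod_cpow.
  assert (Hpow : (pi ^ (2 * n * n + 2 * n + 1) <= pi ^ n)%R) by (apply pow_le_decr; [lra | lia]).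
  assert (0 <= Cmod z ^ n)%R by (apply pow_le, Cmod_ge_0).
  assert (0 <= pi ^ (2 * n * n + 2 * n + 1))%R by (apply pow_le; lra).
  assert (pi ^ (2 * n * n + 2 * n + 1) * Cmod (/ (qpoch q (q * q) (S n) * qpoch (z * q) (q * q) (S n)))
          <= pi ^ n * exp t)%R
    by (apply Rmult_le_compat; auto using Cmod_ge_0).
  rewrite Rmult_assoc. apply Rmult_le_compat_l; lra.
Qed.

Let Cmod_rhs1_le_geom : exists M, forall z n, (Cmod z <= / 2)%R -> (Cmod (rhs1 z n) <= M * pi ^ n)%R.
Proof.
  destruct Cmod_rhs1_le as [M [HM0 HM]]. exists M. intros z n Hz.
  eapply Rle_trans; [apply HM, Hz|]. apply Rmult_le_one_l.
  - apply pow_bounds. split; [apply Cmod_ge_0 | lra].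
  - apply Rmult_le_pos; [exact HM0 | apply pow_le; lra].
Qed.

Definition rhs1_sum (z : C) : C := CSeries (rhs1 z).

Lemma is_series_rhs1 z : (Cmod z <= / 2)%R -> is_series (rhs1 z) (rhs1_sum z).
Proof.
  intros Hz. destruct Cmod_rhs1_le_geom as [M HM].
  apply (is_series_dominated _ M pi pi_bounds). intros n. apply HM, Hz.
Qed.

Lemma rhs1_0 z : rhs1 z 0 = q / ((1 - q) * (1 - z * q)).
Proof. unfold rhs1. simpl. unfold Cdiv. f_equal; [ring | f_equal; ring]. Qed.

Lemma rhs1_sum_lipschitz : lipschitz_at_0 rhs1_sum (q / (1 - q)).
Proof.
  destruct Cmod_rhs1_le as [M [HM0 HM]].
  assert (Hq0 := one_sub_neq0 q Hq).
  apply (series_lipschitz_at_0 rhs1 (seq_at0 (q / (1 - q))) rhs1_sum _ (/ 2) (M + 2 * Cmod (q / (1 - q))) pi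
           pi_bounds); [lra | apply is_series_seq_at0 | intros w Hw; apply is_series_rhs1; lra |].
  intros w [|n] Hw; simpl seq_at0.
  - assert (Hwq : (Cmod (w * q) <= / 2)%R) by Cmod_le_factor.
    assert (Hwq1 := one_sub_neq0 (w * q) ltac:(lra)).
    rewrite rhs1_0.
    replace (q / ((1 - q) * (1 - w * q)) - q / (1 - q)) with (q / (1 - q) * (w * q) / (1 - w * q))
      by (field; split; assumption).
    eapply Rle_trans.
    + apply (Cmod_div_le _ _ (Cmod (q / (1 - q)) * Cmod w) (/ 2)); [lra | |].
      * rewrite Cmod_mult. apply Rmult_le_compat_l; [apply Cmod_ge_0 | Cmod_le_factor].
      * pose proof (Cmod_1_sub_ge (w * q)). lra.
    + pose proof (Cmod_ge_0 w). pose proof (Cmod_ge_0 (q / (1 - q))). simpl. nra.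
  - rewrite Csub_0_r. eapply Rle_trans; [apply HM; lra|].
    change (Cmod w ^ S n)%R with (Cmod w * Cmod w ^ n)%R.
    assert (Hpow := pow_bounds (Cmod w) n ltac:(split; [apply Cmod_ge_0 | lra])).
    assert (0 <= pi ^ S n)%R by (apply pow_le; lra).
    assert (0 <= M * pi ^ S n)%R by (apply Rmult_le_pos; lra).
    assert (Cmod w ^ n * (M * pi ^ S n) <= (M + 2 * Cmod (q / (1 - q))) * pi ^ S n)%R.
    { pose proof (Cmod_ge_0 (q / (1 - q))). nra. }
    pose proof (Cmod_ge_0 w). nra.
Qed.

Lemma rhs1_scale z n : (Cmod z <= / 2)%R ->
  rhs1 (z * (q * q)) n * (1 - z * q * q * q * (cpow q n * cpow q n))
  = (1 - z * q) * (cpow q n * cpow q n) * rhs1 z n.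
Proof.
  intros Hz.
  assert (hP := qpoch_zq_neq0 z (S n) Hz).
  assert (hP' : qpoch (z * (q * q) * q) (q * q) (S n) <> 0) by (apply qpoch_zq_neq0; Cmod_le_factor).
  assert (hQ := qpoch_q_neq0 (S n)).
  assert (h1 : 1 - z * q <> 0) by (apply one_sub_neq0, (Rle_lt_trans _ (/ 2)); [Cmod_le_factor | lra]).
  assert (E : (1 - z * q) * qpoch (z * (q * q) * q) (q * q) (S n)
              = qpoch (z * q) (q * q) (S n) * (1 - z * q * q * q * (cpow q n * cpow q n))).
  { replace (z * (q * q) * q) with (z * q * (q * q)) by ring.
    rewrite <- qpoch_recl, qpoch_recr.
    change (cpow (q * q) (S n)) with (q * q * cpow (q * q) n). rewrite cpow_mul. ring. }
  assert (Hs : 1 - z * q * q * q * (cpow q n * cpow q n)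
               = (1 - z * q) * qpoch (z * (q * q) * q) (q * q) (S n) / qpoch (z * q) (q * q) (S n))
    by (rewrite E; field; exact hP).
  unfold rhs1. rewrite Hs, (cpow_mul z (q * q)), (cpow_mul q q).
  field. repeat split; assumption.
Qed.

Lemma rhs1_succ z n : (Cmod z <= / 2)%R ->
  rhs1 z (S n) * ((1 - q * q * q * (cpow q n * cpow q n)) * (1 - z * q * q * q * (cpow q n * cpow q n)))
  = z * (q * q * q * q) * (cpow q n * cpow q n * (cpow q n * cpow q n)) * rhs1 z n.
Proof.
  intros Hz.
  assert (hP := qpoch_zq_neq0 z (S n) Hz). assert (hQ := qpoch_q_neq0 (S n)).
  assert (h1 : 1 - q * (q * q * (cpow q n * cpow q n)) <> 0)
    by (apply one_sub_neq0, (Rle_lt_trans _ (Cmod q)); [Cmod_le_factor | exact Hq]).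
  assert (h2 : 1 - z * q * (q * q * (cpow q n * cpow q n)) <> 0)
    by (apply one_sub_neq0, (Rle_lt_trans _ (/ 2)); [Cmod_le_factor | lra]).
  unfold rhs1.
  replace (2 * S n * S n + 2 * S n + 1)%nat with ((2 * n * n + 2 * n + 1) + (n + n + n + n + 4))%nat by lia.
  rewrite !cpow_add, (qpoch_recr q (q * q) (S n)), (qpoch_recr (z * q) (q * q) (S n)).
  change (cpow z (S n)) with (z * cpow z n).
  change (cpow (q * q) (S n)) with (q * q * cpow (q * q) n). rewrite cpow_mul.
  simpl cpow. field. repeat split; neq0_by_ring.
Qed.

Lemma rhs1_sum_recursion z : (Cmod z <= / 2)%R -> (1 - z * q) * rhs1_sum z - q * rhs1_sum (z * (q * q)) = q.
Proof.
  intros Hz.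
  assert (Hz2 : (Cmod (z * (q * q)) <= / 2)%R) by Cmod_le_factor.
  assert (H0 : is_series (fun n => (1 - z * q) * rhs1 z n) ((1 - z * q) * rhs1_sum z))
    by exact (is_series_scal (K := C_AbsRing) (V := C_NormedModule) _ _ _ (is_series_rhs1 z Hz)).
  assert (Hlin := is_series_lin _ _ _ _ (- q) H0 (is_series_rhs1 (z * (q * q)) Hz2)).
  destruct Cmod_rhs1_le_geom as [M HM].
  assert (Htel : is_series (fun n => (1 - z * q) * rhs1 z n + - q * rhs1 (z * (q * q)) n)
                           ((1 - z * q) * (1 - q * (cpow q 0 * cpow q 0)) * rhs1 z 0)).
  { apply (is_series_telescope _ (fun n => (1 - z * q) * (1 - q * (cpow q n * cpow q n)) * rhs1 z n)
             ((1 + 1) * (1 + 1) * M) pi pi_bounds).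
    - intros n.
      assert (h1 : 1 - q * q * q * (cpow q n * cpow q n) <> 0)
        by (apply one_sub_neq0, (Rle_lt_trans _ (Cmod q)); [Cmod_le_factor | exact Hq]).
      assert (h2 : 1 - z * q * q * q * (cpow q n * cpow q n) <> 0)
        by (apply one_sub_neq0, (Rle_lt_trans _ (/ 2)); [Cmod_le_factor | lra]).
      assert (f1 : rhs1 (z * (q * q)) n
                   = (1 - z * q) * (cpow q n * cpow q n) * rhs1 z n / (1 - z * q * q * q * (cpow q n * cpow q n)))
        by (rewrite <- (rhs1_scale z n Hz); field; exact h2).
      assert (f2 : rhs1 z (S n) = z * (q * q * q * q) * (cpow q n * cpow q n * (cpow q n * cpow q n)) * rhs1 z n
                     / ((1 - q * q * q * (cpow q n * cpow q n)) * (1 - z * q * q * q * (cpow q n * cpow q n))))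
        by (rewrite <- (rhs1_succ z n Hz); field; split; assumption).
      change (cpow q (S n)) with (q * cpow q n).
      rewrite f1, f2. field. split; neq0_by_ring.
    - intros n. rewrite !Cmod_mult.
      assert (H1 : (Cmod (1 - z * q) <= 1 + 1)%R) by (apply Cmod_sub_le; Cmod_le1).
      assert (H2 : (Cmod (1 - q * (cpow q n * cpow q n)) <= 1 + 1)%R) by (apply Cmod_sub_le; Cmod_le1).
      assert (H3 := HM z n Hz).
      replace ((1 + 1) * (1 + 1) * M * pi ^ n)%R with ((1 + 1) * (1 + 1) * (M * pi ^ n))%R by ring.
      apply Rmult_le_compat; [apply Rmult_le_pos | | |]; auto using Cmod_ge_0.
      apply Rmult_le_compat; auto using Cmod_ge_0. }
  replace ((1 - z * q) * (1 - q * (cpow q 0 * cpow q 0)) * rhs1 z 0) with q in Htel.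
  - transitivity ((1 - z * q) * rhs1_sum z + - q * rhs1_sum (z * (q * q))); [ring|].
    exact (is_series_C_unique _ _ _ Hlin Htel).
  - assert (h1 : 1 - z * q <> 0) by (apply one_sub_neq0, (Rle_lt_trans _ (/ 2)); [Cmod_le_factor | lra]).
    rewrite rhs1_0. simpl. field. split; [exact h1 | apply one_sub_neq0, Hq].
Qed.

Lemma first_identity z : (Cmod z < / 2)%R -> exists T, is_series (lhs1 z) T /\ is_series (rhs1 z) T.
Proof.
  intros Hz. exists (rhs1_sum z). split; [|apply is_series_rhs1; lra].
  replace (rhs1_sum z) with (lhs1_sum z); [apply is_series_lhs1; lra|].
  apply (q_difference_unique (q * q) (/ 2) Hqq lhs1_sum rhs1_sum 1 (- q) q 0 q (q / (1 - q)));
    [| | | | | apply lhs1_sum_lipschitz | apply rhs1_sum_lipschitz | exact Hz].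
  - intros w Hw. apply Csub_eq0.
    transitivity ((1 - w * q) * lhs1_sum w - (1 + q - w * q * q * q) * lhs1_sum (w * (q * q))
                  + q * lhs1_sum (w * (q * q) * (q * q))); [ring|].
    apply lhs1_sum_recursion. lra.
  - intros w Hw. transitivity ((1 - w * q) * rhs1_sum w - q * rhs1_sum (w * (q * q))); [ring|].
    apply rhs1_sum_recursion. lra.
  - intros w Hw. replace (1 + - q * w) with (1 - w * q) by ring.
    apply one_sub_neq0, (Rle_lt_trans _ (/ 2)); [Cmod_le_factor | lra].
  - exists (1 - pi)%R. split; [lra|]. intros w Hw.
    replace (q + 0 * w) with q by ring. replace (1 + - q * w) with (1 - w * q) by ring.
    eapply Rle_trans; [|apply Cmod_1_sub_ge].
    assert (Cmod (w * q) <= Cmod w)%R by Cmod_le_factor. lra.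
  - field. apply one_sub_neq0, Hq.
Qed.

End Identities.

Theorem theorem1p1 :
  exists r : R, (0 < r)%R /\
  forall q z : Complex.C, (Cmod q < 1)%R -> (Cmod z < r)%R ->
    (* first identity; the left sum runs over n >= 1, written with n := m+1 *)
    (exists L1 : Complex.C,
        is_series (fun m : nat =>
          let n := S m in
          Cdiv (cpow q n)
               (Cmult (qpoch (Cmult z (cpow q n)) q (S n))
                      (qpoch_inf (Cmult z (cpow q (2 * n + 2))) (Cmult q q)))) L1
     /\ is_series (fun n : nat =>
          Cdiv (Cmult (cpow z n) (cpow q (2 * n * n + 2 * n + 1)))
               (Cmult (qpoch q (Cmult q q) (S n))
                      (qpoch (Cmult z q) (Cmult q q) (S n)))) L1)
    /\
    (* second identity *)
    (exists T : Complex.C,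
        is_series (fun n : nat =>
          Cmult (cpow q n)
            (Cmult (qpoch (Copp (Cmult z (cpow q (S n)))) q n)
                   (qpoch_inf (Copp (Cmult z (cpow q (2 * n + 2)))) (Cmult q q)))) T
     /\ is_series (fun n : nat =>
          Cdiv (Cmult (cpow z n) (cpow q (n * n + n)))
               (qpoch q (Cmult q q) (S n))) T).
Proof.
  exists (/ 2)%R. split; [lra|]. intros q z Hq Hz. split.
  - exact (first_identity q Hq z Hz).
  - exact (second_identity q Hq z Hz).
Qed.
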